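(* Let $s>-\frac12$ and $\delta>0$. There exists $\varepsilon_0>0$ such that for every $\varepsilon\in(0,\varepsilon_0)$ there exist global solutions $\tilde V_1^\varepsilon,\tilde V_2^\varepsilon\in C(\mathbb{R};H^s_+(\mathbb{R}))$ of the cubic Szeg\H{o} equation $i\partial_tV=\Pi_+(|V|^2V)$ such that $$\|\tilde V_1^\varepsilon(0)\|_{H^s}+\|\tilde V_2^\varepsilon(0)\|_{H^s}\lesssim\varepsilon,\qquad \|\tilde V_1^\varepsilon(0)-\tilde V_2^\varepsilon(0)\|_{H^s}\sim\varepsilon|\log\varepsilon|^{-1/2},$$ and $$\|\tilde V_1^\varepsilon(t)-\tilde V_2^\varepsilon(t)\|_{H^s}\gtrsim\varepsilon\quad\text{for all } t\ge\frac{\delta}{\varepsilon^2}|\log\varepsilon|.$$ (One may take $\tilde V_j^\varepsilon(t,x)=\frac{\alpha_je^{-i\omega_jt}}{x-c_jt+i}$ with $\alpha_1=\varepsilon$, $\alpha_2=\varepsilon(1+|\log\varepsilon|^{-1/2})$, $c_j=\alpha_j^2/2$, $\omega_j=\alpha_j^2/4$.)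
   Context: $\Pi_+$ is the Szeg\H{o} projector $\widehat{\Pi_+f}(\xi)=\widehat f(\xi)\mathbf 1_{\xi\ge0}$, $\widehat f(\xi)=\int e^{-ix\xi}f(x)dx$. $H^s_+(\mathbb{R})$ is the set of $f\in H^s(\mathbb{R})$ with $\operatorname{supp}\widehat f\subset[0,\infty)$, normed by $\|f\|_{H^s}=\frac1{\sqrt{2\pi}}(\int\langle\xi\rangle^{2s}|\widehat f|^2d\xi)^{1/2}$. Implicit constants are independent of $\varepsilon$ and $t$ (they may depend on $s,\delta$). *)

From Stdlib Require Import Reals.
Open Scope R_scope.

Definition Cplx : Type := (R * R)%type.
Definition C0 : Cplx := (0, 0).
Definition Ci : Cplx := (0, 1).
Definition Cadd (z w : Cplx) : Cplx := (fst z + fst w, snd z + snd w).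
Definition Csub (z w : Cplx) : Cplx := (fst z - fst w, snd z - snd w).
Definition Cmul (z w : Cplx) : Cplx :=
  (fst z * fst w - snd z * snd w, fst z * snd w + snd z * fst w).
Definition Cscale (r : R) (z : Cplx) : Cplx := (r * fst z, r * snd z).
Definition Cnorm2 (z : Cplx) : R := fst z * fst z + snd z * snd z.
Definition Cexpi (theta : R) : Cplx := (cos theta, sin theta).

Definition int_ab (f : R -> R) (a b l : R) : Prop :=
  exists pr : Riemann_integrable f a b, RiemannInt pr = l.

Definition improper_int (f : R -> R) (l : R) : Prop :=
  forall e, 0 < e -> exists M, 0 < M /\
    forall a b, a <= - M -> M <= b ->
      exists v, int_ab f a b v /\ Rabs (v - l) < e.

Definition cimproper_int (f : R -> Cplx) (z : Cplx) : Prop :=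
  improper_int (fun x => fst (f x)) (fst z) /\
  improper_int (fun x => snd (f x)) (snd z).

Definition L2 (f : R -> Cplx) : Prop :=
  exists l, improper_int (fun x => Cnorm2 (f x)) l.

Definition has_FT (f : R -> Cplx) (xi : R) (z : Cplx) : Prop :=
  cimproper_int (fun x => Cmul (Cexpi (- (x * xi))) (f x)) z.

(* ||f||_{H^s} = N, with
   ||f||_{H^s} = (1/sqrt(2 pi)) (int <xi>^{2s} |hat f(xi)|^2 dxi)^{1/2},
   <xi>^{2s} = (1 + xi^2)^s.  hat f is only required off the null set {0}. *)
Definition Hs_norm_is (s : R) (f : R -> Cplx) (N : R) : Prop :=
  0 <= N /\
  exists F : R -> Cplx,
    (forall xi, xi <> 0 -> has_FT f xi (F xi)) /\
    improper_int (fun xi => Rpower (1 + xi ^ 2) s * Cnorm2 (F xi))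
                 (2 * PI * N ^ 2).

(* f in H^s_+(R): finite H^s norm, Fourier support in [0, +oo).
   (We additionally require f in L^2 so that the Fourier transform given by
   improper integrals coincides a.e. with the genuine (Plancherel) one.) *)
Definition in_Hs_plus (s : R) (f : R -> Cplx) : Prop :=
  L2 f /\
  (forall xi, xi < 0 -> has_FT f xi C0) /\
  exists N, Hs_norm_is s f N.

Definition is_Pi_plus (f g : R -> Cplx) : Prop :=
  forall xi, xi <> 0 ->
    exists zf, has_FT f xi zf /\
               has_FT g xi (if Rle_dec 0 xi then zf else C0).

Definition szego_solution (s : R) (V : R -> R -> Cplx) : Prop :=
  (forall t, in_Hs_plus s (V t)) /\
  (forall t0 e, 0 < e -> exists eta, 0 < eta /\
     forall t, Rabs (t - t0) < eta ->
       exists N, Hs_norm_is s (fun x => Csub (V t x) (V t0 x)) N /\ N < e) /\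
  exists W : R -> R -> Cplx,
    (forall t x,
       derivable_pt_lim (fun tau => fst (V tau x)) t (fst (W t x)) /\
       derivable_pt_lim (fun tau => snd (V tau x)) t (snd (W t x))) /\
    (forall t,
       L2 (W t) /\
       is_Pi_plus (fun x => Cscale (Cnorm2 (V t x)) (V t x))
                  (fun x => Cmul Ci (W t x))).

(* The travelling waves [V(t, x) = a e^{-i a^2 t / 4} / (x - a^2 t / 2 + i)] solve the cubic
   Szegő equation: the Fourier transform of [1 / (x + i)] is [-i kappa e^{-xi} 1_{xi > 0}],
   and by partial fractions [|V|^2 V] is a combination of [(x + i)^-1], [(x - i)^-1] and
   [(x + i)^-2], of which [Pi_+] removes exactly the middle one.  Hence the [H^s] norm of a
   wave is [|a|] times a constant [mu s], and two waves with amplitudes [eps] and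
   [eps (1 + |log eps|^{-1/2})] start at distance [eps |log eps|^{-1/2} mu s].  Their
   Fourier transforms differ by the phase [(c2 - c1) t xi]; once [(c2 - c1) t >= 4] this
   phase averages out on [1 <= xi <= 2], which bounds their distance below by a multiple
   of [eps], and this happens for [t >= delta |log eps| / eps^2].

   The transform of [1 / (x + i)] is computed with real improper Riemann integrals: the
   truncations [X_M] of [Q xi = Re int e^{i x xi} / (1 + i x) dx] satisfy
   [X_M' = -X_M + 2 sin (M xi) / xi], whose forcing term integrates to [O(1/M)], so
   [e^xi Q xi] is constant on each half-line, and boundedness of [Q] forces [Q = 0] for
   [xi < 0]. *)

From Stdlib Require Import Reals Lra Lia ClassicalEpsilon.
From Coquelicot Require Import Coquelicot.
Open Scope R_scope.

(** * Improper integrals *)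

Lemma RInt_correct_R (f : R -> R) a b : ex_RInt f a b -> is_RInt f a b (RInt f a b).
Proof. exact (RInt_correct (V := R_CompleteNormedModule) f a b). Qed.

Lemma RInt_Chasles_R (f : R -> R) a b c : ex_RInt f a b -> ex_RInt f b c ->
  RInt f a b + RInt f b c = RInt f a c.
Proof. exact (RInt_Chasles (V := R_CompleteNormedModule) f a b c). Qed.

Lemma RInt_plus_R (f g : R -> R) a b : ex_RInt f a b -> ex_RInt g a b ->
  RInt (fun x => f x + g x) a b = RInt f a b + RInt g a b.
Proof. exact (RInt_plus (V := R_CompleteNormedModule) f g a b). Qed.

Lemma RInt_scal_R (f : R -> R) a b l : ex_RInt f a b ->
  RInt (fun x => l * f x) a b = l * RInt f a b.
Proof. exact (RInt_scal (V := R_CompleteNormedModule) f a b l). Qed.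

Lemma ex_RInt_plus_R (f g : R -> R) a b : ex_RInt f a b -> ex_RInt g a b ->
  ex_RInt (fun x => f x + g x) a b.
Proof. exact (ex_RInt_plus (V := R_NormedModule) f g a b). Qed.

Lemma ex_RInt_scal_R (f : R -> R) a b l : ex_RInt f a b ->
  ex_RInt (fun x => l * f x) a b.
Proof. exact (ex_RInt_scal (V := R_NormedModule) f a b l). Qed.

Lemma ex_RInt_Chasles_1_R (f : R -> R) a b c : a <= b <= c -> ex_RInt f a c -> ex_RInt f a b.
Proof. exact (ex_RInt_Chasles_1 (V := R_CompleteNormedModule) f a b c). Qed.

Lemma ex_RInt_Chasles_2_R (f : R -> R) a b c : a <= b <= c -> ex_RInt f a c -> ex_RInt f b c.
Proof. exact (ex_RInt_Chasles_2 (V := R_CompleteNormedModule) f a b c). Qed.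

Lemma ex_RInt_continuous_R (f : R -> R) a b : (forall x, continuous f x) -> ex_RInt f a b.
Proof. intros Hf. apply (ex_RInt_continuous (V := R_CompleteNormedModule)); auto. Qed.

Lemma ex_derive_continuous_R (f : R -> R) x : ex_derive f x -> continuous f x.
Proof. exact (ex_derive_continuous (K := R_AbsRing) (V := R_NormedModule) f x). Qed.

Ltac side_conditions := repeat match goal with
  | |- _ /\ _ => split
  | |- True => exact I
  | |- ?a * ?b <> 0 => apply Rmult_integral_contrapositive_currified
  | |- ?a ^ _ <> 0 => apply pow_nonzero
  | |- _ <> _ => first [assumption | let H := fresh in intro H]
  end; try lra; try nra.

Lemma RInt_abs_le_is_RInt (f g : R -> R) a b v : a <= b -> ex_RInt f a b ->
  is_RInt g a b v -> (forall x, a < x < b -> Rabs (f x) <= g x) -> Rabs (RInt f a b) <= v.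
Proof.
  intros Hab Hf Hg Hfg.
  assert (Eg : ex_RInt g a b) by (exists v; auto).
  assert (Ig : RInt g a b = v) by (apply is_RInt_unique; auto).
  assert (Hg' : is_RInt (fun x => - g x) a b (- v)) by exact (is_RInt_opp g a b v Hg).
  assert (Ig' : RInt (fun x => - g x) a b = - v) by (apply is_RInt_unique; auto).
  apply Rabs_le; split.
  - rewrite <- Ig'. apply RInt_le; auto; [exists (- v); auto|].
    intros x Hx. specialize (Hfg x Hx). apply Rabs_le_between in Hfg. lra.
  - rewrite <- Ig. apply RInt_le; auto.
    intros x Hx. specialize (Hfg x Hx). apply Rabs_le_between in Hfg. lra.
Qed.

Lemma int_ab_is_RInt f a b l : int_ab f a b l <-> is_RInt f a b l.
Proof.
  split.
  - intros [pr Hpr]. rewrite <- Hpr, <- (RInt_Reals f a b pr).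
    apply RInt_correct_R, ex_RInt_Reals_1, pr.
  - intros H. exists (ex_RInt_Reals_0 f a b (ex_intro _ l H)).
    rewrite <- RInt_Reals. apply is_RInt_unique, H.
Qed.

Lemma improper_int_intro f l :
  (forall a b, ex_RInt f a b) ->
  (forall e, 0 < e -> exists M, 0 < M /\
     forall a b, a <= - M -> M <= b -> Rabs (RInt f a b - l) < e) ->
  improper_int f l.
Proof.
  intros Hex H e He. destruct (H e He) as [M [HM HH]].
  exists M; split; auto. intros a b Ha Hb. exists (RInt f a b); split.
  - apply int_ab_is_RInt, RInt_correct_R, Hex.
  - apply HH; auto.
Qed.

Lemma improper_int_elim f l : improper_int f l ->
  forall e, 0 < e -> exists M, 0 < M /\
    forall a b, a <= - M -> M <= b -> ex_RInt f a b /\ Rabs (RInt f a b - l) < e.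
Proof.
  intros H e He. destruct (H e He) as [M [HM HH]]. exists M; split; auto.
  intros a b Ha Hb. destruct (HH a b Ha Hb) as [v [Hv Hl]].
  apply int_ab_is_RInt in Hv. split; [exists v; exact Hv|].
  rewrite (is_RInt_unique _ _ _ _ Hv). exact Hl.
Qed.

Lemma improper_int_elim2 f l g l' : improper_int f l -> improper_int g l' ->
  forall e, 0 < e -> exists M, 0 < M /\ forall N, M <= N ->
    ex_RInt f (- N) N /\ Rabs (RInt f (- N) N - l) < e /\
    ex_RInt g (- N) N /\ Rabs (RInt g (- N) N - l') < e.
Proof.
  intros Hf Hg e He.
  destruct (improper_int_elim f l Hf e He) as [M1 [HM1 H1]].
  destruct (improper_int_elim g l' Hg e He) as [M2 [HM2 H2]].
  pose proof (Rmax_l M1 M2). pose proof (Rmax_r M1 M2).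
  exists (Rmax M1 M2). split; [lra|]. intros N HN.
  destruct (H1 (- N) N) as [E1 A1]; try lra.
  destruct (H2 (- N) N) as [E2 A2]; try lra.
  tauto.
Qed.

Lemma improper_int_ex_RInt f l : improper_int f l -> forall a b, ex_RInt f a b.
Proof.
  intros H.
  assert (Hle : forall a b, a <= b -> ex_RInt f a b).
  { intros a b Hab. destruct (improper_int_elim f l H 1 Rlt_0_1) as [M [HM HH]].
    set (M' := Rmax M (Rmax (Rabs a) (Rabs b))).
    assert (HMM : M <= M') by apply Rmax_l.
    assert (Ha : Rabs a <= M') by (eapply Rle_trans; [apply Rmax_l|apply Rmax_r]).
    assert (Hb : Rabs b <= M') by (eapply Rle_trans; [apply Rmax_r|apply Rmax_r]).
    apply Rabs_le_between in Ha. apply Rabs_le_between in Hb.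
    destruct (HH (- M') M') as [Hex _]; try lra.
    apply ex_RInt_Chasles_1_R with M'; [lra|].
    apply ex_RInt_Chasles_2_R with (- M'); [lra|exact Hex]. }
  intros a b. destruct (Rle_dec a b); [auto|].
  apply ex_RInt_swap, Hle. lra.
Qed.

Lemma improper_int_ext f g l : (forall x, f x = g x) -> improper_int f l -> improper_int g l.
Proof.
  intros Hfg H e He. destruct (H e He) as [M [HM HH]]. exists M; split; auto.
  intros a b Ha Hb. destruct (HH a b Ha Hb) as [v [Hv Hl]]. exists v; split; auto.
  apply int_ab_is_RInt. apply int_ab_is_RInt in Hv. apply is_RInt_ext with f; auto.
Qed.

Lemma improper_int_unique f l1 l2 : improper_int f l1 -> improper_int f l2 -> l1 = l2.
Proof.
  intros H1 H2. apply Rminus_diag_uniq. apply Rabs_eq_0.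
  apply Rle_antisym; [|apply Rabs_pos]. apply Rnot_lt_le. intros Hlt.
  destruct (improper_int_elim2 f l1 f l2 H1 H2 (Rabs (l1 - l2) / 2)) as [M [HM HH]]; [lra|].
  destruct (HH M (Rle_refl M)) as [_ [A1 [_ A2]]].
  pose proof (Rabs_triang (- (RInt f (- M) M - l1)) (RInt f (- M) M - l2)) as Htri.
  rewrite Rabs_Ropp in Htri.
  replace (- (RInt f (- M) M - l1) + (RInt f (- M) M - l2)) with (l1 - l2) in Htri by ring.
  lra.
Qed.

Lemma improper_int_lin f g l1 l2 p q :
  improper_int f l1 -> improper_int g l2 ->
  improper_int (fun x => p * f x + q * g x) (p * l1 + q * l2).
Proof.
  intros H1 H2.
  assert (Ef := improper_int_ex_RInt f l1 H1). assert (Eg := improper_int_ex_RInt g l2 H2).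
  apply improper_int_intro.
  { intros a b. apply (ex_RInt_plus_R (fun x => p * f x) (fun x => q * g x));
      apply ex_RInt_scal_R; auto. }
  intros e He.
  set (k := Rabs p + Rabs q + 1).
  assert (Hk : 0 < k) by (unfold k; generalize (Rabs_pos p) (Rabs_pos q); lra).
  destruct (improper_int_elim f l1 H1 (e / k)) as [M1 [HM1 HH1]]; [apply Rdiv_lt_0_compat; lra|].
  destruct (improper_int_elim g l2 H2 (e / k)) as [M2 [HM2 HH2]]; [apply Rdiv_lt_0_compat; lra|].
  pose proof (Rmax_l M1 M2). pose proof (Rmax_r M1 M2).
  exists (Rmax M1 M2); split; [lra|]. intros a b Ha Hb.
  destruct (HH1 a b) as [_ A1]; try lra. destruct (HH2 a b) as [_ A2]; try lra.
  rewrite (RInt_plus_R (fun x => p * f x) (fun x => q * g x)) by (apply ex_RInt_scal_R; auto).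
  rewrite !RInt_scal_R by auto.
  replace (p * RInt f a b + q * RInt g a b - (p * l1 + q * l2)) with
    (p * (RInt f a b - l1) + q * (RInt g a b - l2)) by ring.
  eapply Rle_lt_trans; [apply Rabs_triang|]. rewrite !Rabs_mult.
  assert (Rabs p * Rabs (RInt f a b - l1) <= Rabs p * (e / k))
    by (apply Rmult_le_compat_l; [apply Rabs_pos|lra]).
  assert (Rabs q * Rabs (RInt g a b - l2) <= Rabs q * (e / k))
    by (apply Rmult_le_compat_l; [apply Rabs_pos|lra]).
  assert ((Rabs p + Rabs q) * (e / k) < e).
  { replace e with (k * (e / k)) at 2 by (field; lra).
    apply Rmult_lt_compat_r; [apply Rdiv_lt_0_compat|unfold k]; lra. }
  lra.
Qed.

Lemma improper_int_scal f l k : improper_int f l -> improper_int (fun x => k * f x) (k * l).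
Proof.
  intros H. replace (k * l) with (k * l + 0 * l) by ring.
  apply improper_int_ext with (2 := improper_int_lin f f l l k 0 H H). intros x. ring.
Qed.

Lemma improper_int_shift f l c : improper_int f l -> improper_int (fun x => f (x - c)) l.
Proof.
  intros H.
  assert (Hsh : forall a b, is_RInt (fun x => f (x - c)) a b (RInt f (a - c) (b - c))).
  { intros a b.
    apply is_RInt_ext with (fun x => 1 * f (1 * x + - c)); [intros x _; cbv beta;
      replace (1 * x + - c) with (x - c) by ring; apply Rmult_1_l|].
    apply (is_RInt_comp_lin (V := R_NormedModule)).
    replace (1 * a + - c) with (a - c) by ring. replace (1 * b + - c) with (b - c) by ring.
    apply RInt_correct_R, (improper_int_ex_RInt f l H). }
  apply improper_int_intro; [intros a b; eexists; apply Hsh|].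
  intros e He. destruct (improper_int_elim f l H e He) as [M [HM HH]].
  pose proof (Rle_abs c). pose proof (Rle_abs (- c)). rewrite Rabs_Ropp in *.
  exists (M + Rabs c); split; [lra|]. intros a b Ha Hb.
  rewrite (is_RInt_unique _ _ _ _ (Hsh a b)). apply HH; lra.
Qed.

Lemma improper_int_opp_var f l : improper_int f l -> improper_int (fun x => f (- x)) l.
Proof.
  intros H.
  assert (Hrefl : forall a b, is_RInt (fun x => f (- x)) a b (RInt f (- b) (- a))).
  { intros a b.
    apply is_RInt_ext with (fun x => -1 * (-1 * f (-1 * x + 0))).
    { intros x _. cbv beta. replace (-1 * x + 0) with (- x) by ring.
      change (-1 * (-1 * f (- x)) = f (- x)). ring. }
    replace (RInt f (- b) (- a)) with (scal (-1) (opp (RInt f (- b) (- a)))).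
    2:{ change (-1 * - RInt f (- b) (- a) = RInt f (- b) (- a)). ring. }
    apply (is_RInt_scal (V := R_NormedModule)), (is_RInt_comp_lin (V := R_NormedModule)).
    replace (-1 * a + 0) with (- a) by ring. replace (-1 * b + 0) with (- b) by ring.
    apply (is_RInt_swap (V := R_NormedModule)), RInt_correct_R, (improper_int_ex_RInt f l H). }
  apply improper_int_intro; [intros a b; eexists; apply Hrefl|].
  intros e He. destruct (improper_int_elim f l H e He) as [M [HM HH]].
  exists M; split; auto. intros a b Ha Hb.
  rewrite (is_RInt_unique _ _ _ _ (Hrefl a b)). apply HH; lra.
Qed.

Lemma improper_int_odd f l : (forall x, f (- x) = - f x) -> improper_int f l -> l = 0.
Proof.
  intros Hodd H.
  assert (H' : improper_int f (- l)).
  { apply improper_int_ext with (fun x => - f (- x)); [intros x; rewrite Hodd; ring|].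
    replace (- l) with (-1 * l) by ring.
    apply improper_int_ext with (2 := improper_int_scal _ _ (-1) (improper_int_opp_var f l H)).
    intros x; ring. }
  assert (E := improper_int_unique f l (- l) H H'). lra.
Qed.

Lemma improper_int_abs_le f l K : improper_int f l ->
  (forall a b, a <= b -> Rabs (RInt f a b) <= K) -> Rabs l <= K.
Proof.
  intros H HK. apply Rnot_lt_le. intros Hlt.
  destruct (improper_int_elim f l H (Rabs l - K)) as [M [HM HH]]; [lra|].
  destruct (HH (- M) M) as [_ A]; try lra.
  pose proof (HK (- M) M ltac:(lra)).
  pose proof (Rabs_triang (RInt f (- M) M) (- (RInt f (- M) M - l))) as Htri.
  rewrite Rabs_Ropp in Htri.
  replace (RInt f (- M) M + - (RInt f (- M) M - l)) with l in Htri by ring.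
  lra.
Qed.

Lemma improper_int_le f l g l' : improper_int f l -> improper_int g l' ->
  (forall x, f x <= g x) -> l <= l'.
Proof.
  intros Hf Hg Hfg. apply Rnot_lt_le. intros Hlt.
  destruct (improper_int_elim2 f l g l' Hf Hg ((l - l') / 2)) as [M [HM HH]]; [lra|].
  destruct (HH M (Rle_refl M)) as [E1 [A1 [E2 A2]]].
  assert (RInt f (- M) M <= RInt g (- M) M) by (apply RInt_le; auto; lra).
  apply Rabs_def2 in A1. apply Rabs_def2 in A2. lra.
Qed.

Lemma improper_int_ge_RInt f l a b : improper_int f l -> (forall x, 0 <= f x) -> a <= b ->
  RInt f a b <= l.
Proof.
  intros H Hpos Hab. apply Rnot_lt_le. intros Hlt.
  assert (Ex := improper_int_ex_RInt f l H).
  destruct (improper_int_elim f l H (RInt f a b - l)) as [M1 [HM1 HH]]; [lra|].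
  set (M := Rmax M1 (Rmax (Rabs a) (Rabs b))).
  assert (HMM : M1 <= M) by apply Rmax_l.
  assert (Ha : Rabs a <= M) by (eapply Rle_trans; [apply Rmax_l|apply Rmax_r]).
  assert (Hb : Rabs b <= M) by (eapply Rle_trans; [apply Rmax_r|apply Rmax_r]).
  apply Rabs_le_between in Ha. apply Rabs_le_between in Hb.
  destruct (HH (- M) M) as [_ A]; try lra.
  rewrite <- (RInt_Chasles_R f (- M) a M), <- (RInt_Chasles_R f a b M) in A by auto.
  assert (0 <= RInt f (- M) a) by (apply RInt_ge_0; auto; lra).
  assert (0 <= RInt f b M) by (apply RInt_ge_0; auto; lra).
  apply Rabs_def2 in A. lra.
Qed.

Lemma improper_int_ge0 f l : improper_int f l -> (forall x, 0 <= f x) -> 0 <= l.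
Proof.
  intros H Hpos. pose proof (improper_int_ge_RInt f l 0 0 H Hpos (Rle_refl 0)) as A.
  rewrite RInt_point in A. exact A.
Qed.

Lemma improper_int_ge_truncation f l c M0 : improper_int f l ->
  (forall M, M0 <= M -> c <= RInt f (- M) M) -> c <= l.
Proof.
  intros H HM. apply Rnot_lt_le. intros Hlt.
  destruct (improper_int_elim f l H (c - l)) as [M1 [HM1 HH]]; [lra|].
  pose proof (Rmax_l M0 M1). pose proof (Rmax_r M0 M1).
  destruct (HH (- Rmax M0 M1) (Rmax M0 M1)) as [_ A]; try lra.
  pose proof (HM (Rmax M0 M1) ltac:(lra)). apply Rabs_def2 in A. lra.
Qed.

Lemma one_plus_sq_pos x : 0 < 1 + x ^ 2.
Proof. generalize (pow2_ge_0 x); lra. Qed.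

Lemma is_RInt_inv_sq K p q : 0 < p <= q ->
  is_RInt (fun x => K / x ^ 2) p q (K / p - K / q).
Proof.
  intros Hpq.
  replace (K / p - K / q) with (minus (- K / q) (- K / p))
    by (unfold minus, plus, opp; simpl; field; lra).
  apply (is_RInt_derive (fun x => - K / x)); intros x Hx;
    rewrite Rmin_left, Rmax_right in Hx by lra.
  - auto_derive; side_conditions. field. lra.
  - apply ex_derive_continuous_R. auto_derive. side_conditions.
Qed.

Lemma is_RInt_inv_sq_neg K p q : 0 < p <= q ->
  is_RInt (fun x => K / x ^ 2) (- q) (- p) (K / p - K / q).
Proof.
  intros Hpq.
  replace (K / p - K / q) with (minus (- K / - p) (- K / - q))
    by (unfold minus, plus, opp; simpl; field; lra).
  apply (is_RInt_derive (fun x => - K / x)); intros x Hx;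
    rewrite Rmin_left, Rmax_right in Hx by lra.
  - auto_derive; side_conditions. field. lra.
  - apply ex_derive_continuous_R. auto_derive. side_conditions.
Qed.

Lemma is_RInt_atan a b : is_RInt (fun x => 1 / (1 + x ^ 2)) a b (atan b - atan a).
Proof.
  apply (is_RInt_derive atan (fun x => 1 / (1 + x ^ 2))); intros x _.
  - apply is_derive_Reals. unfold Rdiv. rewrite Rmult_1_l. apply derivable_pt_lim_atan.
  - apply ex_derive_continuous_R. auto_derive. pose proof (one_plus_sq_pos x). lra.
Qed.

Section Dominated.

Variables (f : R -> R) (K : R).
Hypothesis f_ex_RInt : forall a b, ex_RInt f a b.
Hypothesis f_dominated : forall x, Rabs (f x) <= K / (1 + x ^ 2).

Lemma dominated_bound_ge0 : 0 <= K.
Proof.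
  generalize (f_dominated 0) (Rabs_pos (f 0)).
  replace (K / (1 + 0 ^ 2)) with K by (simpl; field). lra.
Qed.

Lemma dominated_RInt_abs_le a b : a <= b -> Rabs (RInt f a b) <= K * PI.
Proof.
  intros Hab. pose proof dominated_bound_ge0.
  eapply Rle_trans.
  - apply (RInt_abs_le_is_RInt f (fun x => K * (1 / (1 + x ^ 2))) a b (K * (atan b - atan a)));
      auto.
    + apply (is_RInt_scal (V := R_NormedModule)), is_RInt_atan.
    + intros x _. rewrite Rmult_div_assoc, Rmult_1_r. apply f_dominated.
  - apply Rmult_le_compat_l; auto. generalize (atan_bound a) (atan_bound b). lra.
Qed.

Lemma dominated_RInt_tail_pos p q : 0 < p <= q -> Rabs (RInt f p q) <= K / p.
Proof.
  intros Hpq. pose proof dominated_bound_ge0.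
  assert (0 <= K / q) by (apply Rdiv_le_0_compat; lra).
  eapply Rle_trans.
  - apply (RInt_abs_le_is_RInt f (fun x => K / x ^ 2) p q (K / p - K / q)); auto.
    + lra.
    + apply is_RInt_inv_sq; auto.
    + intros x Hx. eapply Rle_trans; [apply f_dominated|].
      apply Rmult_le_compat_l; auto. apply Rinv_le_contravar; [apply pow2_gt_0|]; lra.
  - lra.
Qed.

Lemma dominated_RInt_tail_neg p q : 0 < p <= q -> Rabs (RInt f (- q) (- p)) <= K / p.
Proof.
  intros Hpq. pose proof dominated_bound_ge0.
  assert (0 <= K / q) by (apply Rdiv_le_0_compat; lra).
  eapply Rle_trans.
  - apply (RInt_abs_le_is_RInt f (fun x => K / x ^ 2) (- q) (- p) (K / p - K / q)); auto.
    + lra.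
    + apply is_RInt_inv_sq_neg; auto.
    + intros x Hx. eapply Rle_trans; [apply f_dominated|].
      apply Rmult_le_compat_l; auto. apply Rinv_le_contravar; [apply pow2_gt_0|]; lra.
  - lra.
Qed.

Lemma dominated_RInt_outside p a b : 0 < p -> a <= - p -> p <= b ->
  Rabs (RInt f a b - RInt f (- p) p) <= 2 * K / p.
Proof.
  intros Hp Ha Hb.
  rewrite <- (RInt_Chasles_R f a (- p) b), <- (RInt_Chasles_R f (- p) p b) by auto.
  replace (RInt f a (- p) + (RInt f (- p) p + RInt f p b) - RInt f (- p) p)
    with (RInt f (- - a) (- p) + RInt f p b) by (rewrite Ropp_involutive; ring).
  eapply Rle_trans; [apply Rabs_triang|].
  pose proof (dominated_RInt_tail_neg p (- a) ltac:(lra)).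
  pose proof (dominated_RInt_tail_pos p b ltac:(lra)).
  replace (2 * K / p) with (K / p + K / p) by (field; lra). lra.
Qed.

Lemma dominated_inv_small e : 0 < e -> exists N : nat, (0 < N)%nat /\ 2 * K / INR N < e.
Proof.
  intros He. pose proof dominated_bound_ge0.
  destruct (archimed_cor1 (e / (2 * K + 1))) as [N [HN HN0]];
    [apply Rdiv_lt_0_compat; lra|].
  exists N. split; auto.
  assert (HNpos : 0 < INR N) by (apply lt_0_INR; lia).
  apply Rle_lt_trans with ((2 * K + 1) * / INR N).
  - unfold Rdiv. apply Rmult_le_compat_r; [left; apply Rinv_0_lt_compat|]; lra.
  - apply Rmult_lt_reg_l with (/ (2 * K + 1)); [apply Rinv_0_lt_compat; lra|].
    rewrite <- Rmult_assoc, Rinv_l, Rmult_1_l by lra.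
    unfold Rdiv in HN. lra.
Qed.

Lemma dominated_truncations_Cauchy : Cauchy_crit (fun n => RInt f (- INR n) (INR n)).
Proof.
  intros e He. destruct (dominated_inv_small e He) as [N [HN HNe]].
  exists N. intros n m Hn Hm. unfold Rdist.
  assert (HN0 : 0 < INR N) by (apply lt_0_INR; lia).
  assert (Hinv : forall k, (N <= k)%nat -> 2 * K / INR k <= 2 * K / INR N).
  { intros k Hk. pose proof dominated_bound_ge0. unfold Rdiv.
    apply Rmult_le_compat_l; [lra|]. apply Rinv_le_contravar; [lra|apply le_INR; lia]. }
  assert (Hout : forall k l, (N <= k <= l)%nat ->
            Rabs (RInt f (- INR l) (INR l) - RInt f (- INR k) (INR k)) < e).
  { intros k l Hkl. pose proof (Hinv k ltac:(lia)).
    pose proof (dominated_RInt_outside (INR k) (- INR l) (INR l)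
      ltac:(apply lt_0_INR; lia) ltac:(apply Ropp_le_contravar, le_INR; lia)
      ltac:(apply le_INR; lia)).
    lra. }
  destruct (Compare_dec.le_lt_dec n m) as [Hnm|Hnm].
  - rewrite Rabs_minus_sym. apply Hout. lia.
  - apply Hout. lia.
Qed.

Lemma dominated_improper_int : exists l, improper_int f l.
Proof.
  set (u n := RInt f (- INR n) (INR n)).
  destruct (Rcomplete.R_complete u dominated_truncations_Cauchy) as [l Hl].
  exists l. apply improper_int_intro; auto.
  intros e He.
  destruct (Hl (e / 2)) as [N1 HN1]; [lra|].
  destruct (dominated_inv_small (e / 2)) as [N2 [HN2 HN2e]]; [lra|].
  set (N := max N1 N2).
  assert (HN0 : 0 < INR N) by (apply lt_0_INR; unfold N; lia).
  assert (2 * K / INR N <= 2 * K / INR N2).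
  { pose proof dominated_bound_ge0. unfold Rdiv. apply Rmult_le_compat_l; [lra|].
    apply Rinv_le_contravar; [apply lt_0_INR; lia|apply le_INR; unfold N; lia]. }
  exists (INR N). split; auto. intros a b Ha Hb.
  pose proof (dominated_RInt_outside (INR N) a b HN0 Ha Hb).
  pose proof (HN1 N ltac:(unfold N; lia)). unfold Rdist, u in *.
  pose proof (Rabs_triang (RInt f a b - RInt f (- INR N) (INR N)) (RInt f (- INR N) (INR N) - l)).
  replace (RInt f a b - RInt f (- INR N) (INR N) + (RInt f (- INR N) (INR N) - l))
    with (RInt f a b - l) in * by ring.
  lra.
Qed.

End Dominated.

Lemma continuous_dominated_improper_int (f : R -> R) K :
  (forall x, continuous f x) -> (forall x, Rabs (f x) <= K / (1 + x ^ 2)) ->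
  exists l, improper_int f l.
Proof.
  intros Hc Hd. apply (dominated_improper_int f K); auto.
  intros a b. apply ex_RInt_continuous_R; auto.
Qed.

(* Integration by parts at infinity: a derivative term [B'] whose primitive [B]
   vanishes at both ends adds nothing to the improper integral of [g]. *)
Lemma improper_int_derive_plus (B b' g : R -> R) lg K :
  (forall x, is_derive B x (b' x)) -> (forall x, continuous b' x) ->
  (forall x, Rabs (B x) <= K / (1 + Rabs x)) ->
  improper_int g lg -> improper_int (fun x => b' x + g x) lg.
Proof.
  intros HB Hc HBK Hg.
  assert (HK : 0 <= K).
  { generalize (HBK 0) (Rabs_pos (B 0)). rewrite Rabs_R0.
    replace (K / (1 + 0)) with K by field. lra. }
  assert (HI : forall a b, is_RInt b' a b (B b - B a))
    by (intros a b; apply (is_RInt_derive B b'); auto).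
  assert (Eg := improper_int_ex_RInt g lg Hg).
  apply improper_int_intro.
  { intros a b. apply ex_RInt_plus_R; auto. exists (B b - B a); auto. }
  intros e He. destruct (improper_int_elim g lg Hg (e / 2)) as [M [HM HH]]; [lra|].
  set (M' := Rmax M (4 * K / e)).
  assert (HM1 : M <= M') by apply Rmax_l. assert (HM2 : 4 * K / e <= M') by apply Rmax_r.
  assert (HBsmall : forall y, M' <= Rabs y -> Rabs (B y) < e / 4).
  { intros y Hy. eapply Rle_lt_trans; [apply HBK|].
    apply Rmult_lt_reg_r with (1 + Rabs y); [lra|].
    unfold Rdiv. rewrite Rmult_assoc, Rinv_l by lra.
    assert (K <= e / 4 * Rabs y); [|lra].
    apply Rmult_le_reg_r with (4 / e); [apply Rdiv_lt_0_compat; lra|].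
    replace (e / 4 * Rabs y * (4 / e)) with (Rabs y) by (field; lra).
    replace (K * (4 / e)) with (4 * K / e) by (field; lra). lra. }
  exists M'; split; [lra|]. intros a b Ha Hb.
  destruct (HH a b) as [_ A]; try lra.
  rewrite RInt_plus_R by (auto; exists (B b - B a); auto).
  rewrite (is_RInt_unique _ _ _ _ (HI a b)).
  pose proof (HBsmall a ltac:(rewrite Rabs_left1; lra)).
  pose proof (HBsmall b ltac:(rewrite Rabs_right; lra)).
  replace (B b - B a + RInt g a b - lg) with (B b + - B a + (RInt g a b - lg)) by ring.
  eapply Rle_lt_trans; [apply Rabs_triang|].
  eapply Rle_lt_trans; [apply Rplus_le_compat_r, Rabs_triang|]. rewrite Rabs_Ropp. lra.
Qed.

Lemma improper_int_by_parts (B b' g : R -> R) K1 K2 :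
  (forall x, is_derive B x (b' x)) -> (forall x, continuous b' x) ->
  (forall x, Rabs (B x) <= K1 / (1 + Rabs x)) ->
  (forall x, continuous g x) -> (forall x, Rabs (g x) <= K2 / (1 + x ^ 2)) ->
  exists l, improper_int (fun x => b' x + g x) l.
Proof.
  intros HB Hb' HBK Hg HgK.
  destruct (continuous_dominated_improper_int g K2 Hg HgK) as [l Hl].
  exists l. apply (improper_int_derive_plus B b' g l K1); auto.
Qed.

Lemma exp_le_compat x y : x <= y -> exp x <= exp y.
Proof. intros [H|H]; [left; apply exp_increasing, H|right; rewrite H; reflexivity]. Qed.

Lemma Rabs_cos_le_1 x : Rabs (cos x) <= 1.
Proof. generalize (COS_bound x). intros. apply Rabs_le. lra. Qed.

Lemma Rabs_sin_le_1 x : Rabs (sin x) <= 1.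
Proof. generalize (SIN_bound x). intros. apply Rabs_le. lra. Qed.

Lemma Rabs_sin_le x : Rabs (sin x) <= Rabs x.
Proof.
  assert (Hp : forall y, 0 <= y -> Rabs (sin y) <= y).
  { intros y Hy. destruct (Req_dec y 0) as [->|Hy0]; [rewrite sin_0, Rabs_R0; lra|].
    pose proof (sin_lt_x y ltac:(lra)). destruct (Rle_dec y 1).
    - assert (0 <= sin y) by (apply sin_ge_0; generalize PI2_3_2; lra).
      rewrite Rabs_right; lra.
    - generalize (Rabs_sin_le_1 y). lra. }
  destruct (Rle_dec 0 x).
  - rewrite (Rabs_right x) by lra. apply Hp; lra.
  - pose proof (Hp (- x) ltac:(lra)). rewrite sin_neg, Rabs_Ropp in H.
    rewrite (Rabs_left x) by lra. lra.
Qed.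

Lemma cos_ge_1_sq x : 1 - x ^ 2 / 2 <= cos x.
Proof.
  replace x with (2 * (x / 2)) at 2 by field. rewrite cos_2a_sin.
  pose proof (Rabs_sin_le (x / 2)). pose proof (Rabs_pos (sin (x / 2))).
  assert (sin (x / 2) * sin (x / 2) = Rabs (sin (x / 2)) * Rabs (sin (x / 2))).
  { rewrite <- Rabs_mult, Rabs_right; [reflexivity|]. apply Rle_ge; nra. }
  assert (x / 2 * (x / 2) = Rabs (x / 2) * Rabs (x / 2)).
  { rewrite <- Rabs_mult, Rabs_right; [reflexivity|]. apply Rle_ge; nra. }
  nra.
Qed.

Lemma Rabs_div_one_plus_sq p x : Rabs (p / (1 + x ^ 2)) = Rabs p / (1 + x ^ 2).
Proof.
  unfold Rdiv. rewrite Rabs_mult, (Rabs_right (/ _)); auto.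
  apply Rle_ge. left. apply Rinv_0_lt_compat, one_plus_sq_pos.
Qed.

Lemma div_one_plus_sq_le p q x : p <= q -> p / (1 + x ^ 2) <= q / (1 + x ^ 2).
Proof.
  intros H. unfold Rdiv. apply Rmult_le_compat_r; auto.
  left. apply Rinv_0_lt_compat, one_plus_sq_pos.
Qed.

Lemma Rabs_div_one_plus_sq_le p K x : Rabs p <= K -> Rabs (p / (1 + x ^ 2)) <= K / (1 + x ^ 2).
Proof. intros H. rewrite Rabs_div_one_plus_sq. apply div_one_plus_sq_le, H. Qed.

Lemma Rabs_div_one_plus_sq2_le p c K x : c <> 0 -> Rabs p <= K * (1 + x ^ 2) ->
  Rabs (p / (c * (1 + x ^ 2) ^ 2)) <= K / Rabs c / (1 + x ^ 2).
Proof.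
  intros Hc H. pose proof (one_plus_sq_pos x).
  assert (0 < Rabs c) by (apply Rabs_pos_lt; auto).
  replace (p / (c * (1 + x ^ 2) ^ 2)) with (p / (1 + x ^ 2) / c / (1 + x ^ 2))
    by (field; side_conditions).
  rewrite Rabs_div_one_plus_sq. apply div_one_plus_sq_le.
  change (Rabs (p / (1 + x ^ 2) * / c) <= K * / Rabs c).
  rewrite Rabs_mult, Rabs_inv, Rabs_div_one_plus_sq.
  apply Rmult_le_compat_r; [left; apply Rinv_0_lt_compat; auto|].
  apply Rmult_le_reg_r with (1 + x ^ 2); auto.
  unfold Rdiv. rewrite Rmult_assoc, Rinv_l; lra.
Qed.

Lemma Rabs_plus_div_one_plus_sq_le u v K1 K2 x :
  Rabs u <= K1 / (1 + x ^ 2) -> Rabs v <= K2 / (1 + x ^ 2) ->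
  Rabs (u + v) <= (K1 + K2) / (1 + x ^ 2).
Proof.
  intros A B. eapply Rle_trans; [apply Rabs_triang|].
  replace ((K1 + K2) / (1 + x ^ 2)) with (K1 / (1 + x ^ 2) + K2 / (1 + x ^ 2))
    by (field; pose proof (one_plus_sq_pos x); lra).
  lra.
Qed.

Lemma Rabs_one_minus_sq_le x : Rabs (1 - x ^ 2) <= 1 + x ^ 2.
Proof. generalize (pow2_ge_0 x). intros. apply Rabs_le. lra. Qed.

Lemma Rabs_mult_le a b A B : Rabs a <= A -> Rabs b <= B -> Rabs (a * b) <= A * B.
Proof. intros. rewrite Rabs_mult. apply Rmult_le_compat; auto; apply Rabs_pos. Qed.

Lemma Rabs_div_one_plus_sq_id_le x : Rabs x / (1 + x ^ 2) <= 2 / (1 + Rabs x).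
Proof.
  pose proof (one_plus_sq_pos x). pose proof (Rabs_pos x).
  apply Rmult_le_reg_r with ((1 + x ^ 2) * (1 + Rabs x)); [nra|].
  replace (Rabs x / (1 + x ^ 2) * ((1 + x ^ 2) * (1 + Rabs x))) with (Rabs x * (1 + Rabs x))
    by (field; lra).
  replace (2 / (1 + Rabs x) * ((1 + x ^ 2) * (1 + Rabs x))) with (2 * (1 + x ^ 2))
    by (field; lra).
  rewrite <- (pow2_abs x). nra.
Qed.

Lemma Rabs_div_scal_one_plus_sq_le x xi c : xi <> 0 -> Rabs c <= 1 ->
  Rabs (x * c / (xi * (1 + x ^ 2))) <= 2 / Rabs xi / (1 + Rabs x).
Proof.
  intros Hxi Hc. pose proof (one_plus_sq_pos x). pose proof (Rabs_pos x).
  assert (0 < Rabs xi) by (apply Rabs_pos_lt; auto).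
  replace (x * c / (xi * (1 + x ^ 2))) with (x / (1 + x ^ 2) * c * / xi) by (field; lra).
  rewrite !Rabs_mult, Rabs_inv, Rabs_div_one_plus_sq.
  replace (2 / Rabs xi / (1 + Rabs x)) with (2 / (1 + Rabs x) * 1 * / Rabs xi) by (field; lra).
  apply Rmult_le_compat_r; [left; apply Rinv_0_lt_compat; auto|].
  apply Rmult_le_compat; auto using Rabs_pos, Rabs_div_one_plus_sq_id_le.
  apply Rmult_le_pos; [apply Rabs_pos|left; apply Rinv_0_lt_compat; lra].
Qed.

(** * The kernel integral *)

(* [kernel xi] is the real part of [x |-> e^{i x xi} / (1 + i x)]. *)
Definition kernel (xi x : R) := (cos (x * xi) + x * sin (x * xi)) / (1 + x ^ 2).

(* Splitting [kernel xi = kernel_dB xi + kernel_rest xi], where [kernel_dB xi] is the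
   derivative of [kernel_B xi] and [kernel_rest xi] is O(1/x^2). *)
Definition kernel_B xi x := x * - cos (x * xi) / (xi * (1 + x ^ 2)).
Definition kernel_dB xi x :=
  x * sin (x * xi) / (1 + x ^ 2) - (1 - x ^ 2) * cos (x * xi) / (xi * (1 + x ^ 2) ^ 2).
Definition kernel_rest xi x :=
  cos (x * xi) / (1 + x ^ 2) + (1 - x ^ 2) * cos (x * xi) / (xi * (1 + x ^ 2) ^ 2).

Lemma kernel_split xi x : xi <> 0 -> kernel xi x = kernel_dB xi x + kernel_rest xi x.
Proof.
  intros Hxi. unfold kernel, kernel_dB, kernel_rest. field.
  pose proof (one_plus_sq_pos x). lra.
Qed.

Lemma kernel_continuous xi x : continuous (kernel xi) x.
Proof.
  apply ex_derive_continuous_R. unfold kernel. pose proof (one_plus_sq_pos x).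
  auto_derive. side_conditions.
Qed.

Lemma kernel_B_derive xi x : xi <> 0 -> is_derive (kernel_B xi) x (kernel_dB xi x).
Proof.
  intros Hxi. unfold kernel_B, kernel_dB. pose proof (one_plus_sq_pos x).
  auto_derive; side_conditions. field. side_conditions.
Qed.

Lemma kernel_dB_continuous xi x : xi <> 0 -> continuous (kernel_dB xi) x.
Proof.
  intros Hxi. apply ex_derive_continuous_R. unfold kernel_dB. pose proof (one_plus_sq_pos x).
  auto_derive. side_conditions.
Qed.

Lemma kernel_rest_continuous xi x : xi <> 0 -> continuous (kernel_rest xi) x.
Proof.
  intros Hxi. apply ex_derive_continuous_R. unfold kernel_rest. pose proof (one_plus_sq_pos x).
  auto_derive. side_conditions.
Qed.

Lemma kernel_B_bound xi x : xi <> 0 -> Rabs (kernel_B xi x) <= 2 / Rabs xi / (1 + Rabs x).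
Proof.
  intros Hxi. apply Rabs_div_scal_one_plus_sq_le; auto.
  rewrite Rabs_Ropp. apply Rabs_cos_le_1.
Qed.

Lemma kernel_rest_bound xi x : xi <> 0 ->
  Rabs (kernel_rest xi x) <= (1 + 1 / Rabs xi) / (1 + x ^ 2).
Proof.
  intros Hxi. apply Rabs_plus_div_one_plus_sq_le.
  - apply Rabs_div_one_plus_sq_le, Rabs_cos_le_1.
  - apply Rabs_div_one_plus_sq2_le; auto. rewrite Rmult_comm.
    apply Rabs_mult_le; [apply Rabs_cos_le_1|apply Rabs_one_minus_sq_le].
Qed.

Lemma kernel_improper_int xi : xi <> 0 -> exists l, improper_int (kernel xi) l.
Proof.
  intros Hxi.
  destruct (improper_int_by_parts (kernel_B xi) (kernel_dB xi) (kernel_rest xi)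
              (2 / Rabs xi) (1 + 1 / Rabs xi)) as [l Hl];
    intros; auto using kernel_B_derive, kernel_dB_continuous, kernel_B_bound,
      kernel_rest_continuous, kernel_rest_bound.
  exists l. apply improper_int_ext with (2 := Hl). intros x. rewrite kernel_split; auto.
Qed.

(* The value is junk (0) at [xi = 0], where the integral does not converge. *)
Definition kernel_int (xi : R) : R :=
  epsilon (inhabits 0) (fun l => improper_int (kernel xi) l).

Lemma kernel_int_spec xi : xi <> 0 -> improper_int (kernel xi) (kernel_int xi).
Proof. intros Hxi. unfold kernel_int. apply epsilon_spec, kernel_improper_int, Hxi. Qed.

Lemma kernel_int_bound xi : 1 <= Rabs xi -> Rabs (kernel_int xi) <= 12.
Proof.
  intros H1. assert (Hxi : xi <> 0) by (intros ->; rewrite Rabs_R0 in H1; lra).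
  assert (Hinv : 0 <= 1 / Rabs xi <= 1).
  { split; [apply Rdiv_le_0_compat; lra|].
    unfold Rdiv. rewrite Rmult_1_l, <- Rinv_1. apply Rinv_le_contravar; lra. }
  apply (improper_int_abs_le (kernel xi)); [apply kernel_int_spec; auto|]. intros a b Hab.
  assert (Er : forall a b, ex_RInt (kernel_rest xi) a b)
    by (intros; apply ex_RInt_continuous_R; intros; apply kernel_rest_continuous; auto).
  assert (EB : is_RInt (kernel_dB xi) a b (kernel_B xi b - kernel_B xi a))
    by (apply (is_RInt_derive (kernel_B xi)); intros;
          auto using kernel_B_derive, kernel_dB_continuous).
  rewrite (RInt_ext _ (fun x => kernel_dB xi x + kernel_rest xi x))
    by (intros; apply kernel_split; auto).
  rewrite RInt_plus_R, (is_RInt_unique _ _ _ _ EB) by (auto; eexists; eauto).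
  assert (Hb : forall x, Rabs (kernel_B xi x) <= 2).
  { intros x. eapply Rle_trans; [apply kernel_B_bound; auto|].
    pose proof (Rabs_pos x). apply Rmult_le_reg_r with (1 + Rabs x); [lra|].
    replace (2 / Rabs xi / (1 + Rabs x) * (1 + Rabs x)) with (2 * (1 / Rabs xi)) by (field; lra).
    nra. }
  pose proof (dominated_RInt_abs_le (kernel_rest xi) _ Er
                (fun x => kernel_rest_bound xi x Hxi) a b Hab).
  pose proof (Hb a). pose proof (Hb b). pose proof PI_4.
  eapply Rle_trans; [apply Rabs_triang|].
  eapply Rle_trans; [apply Rplus_le_compat_r; apply Rabs_triang|]. rewrite Rabs_Ropp.
  nra.
Qed.

Definition kernel_dxi (xi x : R) := (- x * sin (x * xi) + x ^ 2 * cos (x * xi)) / (1 + x ^ 2).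

Lemma kernel_is_derive_xi xi x : is_derive (fun u => kernel u x) xi (kernel_dxi xi x).
Proof.
  unfold kernel, kernel_dxi. pose proof (one_plus_sq_pos x).
  auto_derive; side_conditions. field. lra.
Qed.

Lemma Derive_kernel_xi xi x : Derive (fun u => kernel u x) xi = kernel_dxi xi x.
Proof. apply is_derive_unique, kernel_is_derive_xi. Qed.

Lemma kernel_dxi_continuity_2d xi x : continuity_2d_pt kernel_dxi xi x.
Proof.
  assert (Hprod : forall u v, continuity_2d_pt (fun u v => v * u) u v)
    by (intros; apply continuity_2d_pt_mult;
          [apply continuity_2d_pt_id2|apply continuity_2d_pt_id1]).
  apply continuity_2d_pt_ext with
    (fun u v => (- v * sin (v * u) + v * v * cos (v * u)) * / (1 + v * v)).
  { intros u v. unfold kernel_dxi. field. pose proof (one_plus_sq_pos v). simpl in *. lra. }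
  apply continuity_2d_pt_mult; [apply continuity_2d_pt_plus; apply continuity_2d_pt_mult|].
  - apply continuity_2d_pt_opp, continuity_2d_pt_id2.
  - apply (continuity_1d_2d_pt_comp sin); [apply continuity_sin|apply Hprod].
  - apply continuity_2d_pt_mult; apply continuity_2d_pt_id2.
  - apply (continuity_1d_2d_pt_comp cos); [apply continuity_cos|apply Hprod].
  - apply continuity_2d_pt_inv.
    + apply continuity_2d_pt_plus; [apply continuity_2d_pt_const|].
      apply continuity_2d_pt_mult; apply continuity_2d_pt_id2.
    + pose proof (one_plus_sq_pos x). simpl in *. lra.
Qed.

Definition kernel_trunc (M xi : R) := RInt (kernel xi) (- M) M.

Lemma is_RInt_cos_sym xi M : xi <> 0 ->
  is_RInt (fun x => cos (x * xi)) (- M) M (2 * sin (M * xi) / xi).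
Proof.
  intros Hxi.
  replace (2 * sin (M * xi) / xi) with (minus (sin (M * xi) / xi) (sin (- M * xi) / xi)).
  2:{ unfold minus, plus, opp; simpl.
      replace (- M * xi) with (- (M * xi)) by ring. rewrite sin_neg. field; auto. }
  apply (is_RInt_derive (fun x => sin (x * xi) / xi)); intros x _.
  - auto_derive; auto. field. auto.
  - apply ex_derive_continuous_R. auto_derive. auto.
Qed.

(* Since [d/dxi kernel = cos(x xi) - kernel], each truncation solves a linear ODE. *)
Lemma kernel_trunc_derive M xi : xi <> 0 ->
  is_derive (kernel_trunc M) xi (- kernel_trunc M xi + 2 * sin (M * xi) / xi).
Proof.
  intros Hxi. unfold kernel_trunc.
  replace (- RInt (kernel xi) (- M) M + 2 * sin (M * xi) / xi) with
    (RInt (fun x => Derive (fun u => kernel u x) xi) (- M) M).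
  - apply (is_derive_RInt_param kernel).
    + apply filter_forall. intros u x _. eexists. apply kernel_is_derive_xi.
    + intros x _. apply continuity_2d_pt_ext with kernel_dxi;
        [intros; symmetry; apply Derive_kernel_xi|].
      apply kernel_dxi_continuity_2d.
    + apply filter_forall. intros u. apply ex_RInt_continuous_R, kernel_continuous.
  - assert (Ek : ex_RInt (kernel xi) (- M) M)
      by apply ex_RInt_continuous_R, kernel_continuous.
    rewrite (RInt_ext _ (fun x => -1 * kernel xi x + cos (x * xi))).
    2:{ intros x _. rewrite Derive_kernel_xi.
        match goal with |- ?a = ?b => change (@eq R a b) end.
        unfold kernel_dxi, kernel. field. pose proof (one_plus_sq_pos x); lra. }
    rewrite RInt_plus_R, RInt_scal_R, (is_RInt_unique _ _ _ _ (is_RInt_cos_sym xi M Hxi)).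
    + match goal with |- ?a = ?b => change (@eq R a b) end. ring.
    + exact Ek.
    + apply ex_RInt_scal_R, Ek.
    + eexists. apply is_RInt_cos_sym, Hxi.
Qed.

(* [exp xi * kernel_trunc M xi] up to a boundary term, chosen so that its derivative
   is O(1/M). *)
Definition kernel_trunc_corrected M xi :=
  exp xi * kernel_trunc M xi + 2 * exp xi / xi * cos (M * xi) / M.
Definition kernel_trunc_corrected_derive M xi :=
  2 * exp xi * (1 / xi - 1 / xi ^ 2) * cos (M * xi) / M.

Lemma kernel_trunc_corrected_is_derive M xi : xi <> 0 -> M <> 0 ->
  is_derive (kernel_trunc_corrected M) xi (kernel_trunc_corrected_derive M xi).
Proof.
  intros Hxi HM. pose proof (kernel_trunc_derive M xi Hxi) as HX.
  unfold kernel_trunc_corrected, kernel_trunc_corrected_derive. auto_derive.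
  - split; [eexists; exact HX|]. side_conditions.
  - replace (Derive (fun x => kernel_trunc M x) xi) with
      (- kernel_trunc M xi + 2 * sin (M * xi) / xi) by (symmetry; apply is_derive_unique, HX).
    field. side_conditions.
Qed.

Lemma kernel_trunc_corrected_derive_bound M xi : 0 < M -> xi <> 0 ->
  Rabs (kernel_trunc_corrected_derive M xi)
    <= 2 * exp xi * (1 / Rabs xi + 1 / Rabs xi ^ 2) / M.
Proof.
  intros HM Hxi. unfold kernel_trunc_corrected_derive.
  assert (0 < Rabs xi) by (apply Rabs_pos_lt; auto). pose proof (exp_pos xi).
  unfold Rdiv. rewrite !Rabs_mult, (Rabs_right 2), (Rabs_right (exp xi)), Rabs_inv,
    (Rabs_right M) by lra.
  apply Rmult_le_compat_r; [left; apply Rinv_0_lt_compat; auto|].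
  rewrite <- (Rmult_1_r (2 * exp xi * (1 * / Rabs xi + 1 * / Rabs xi ^ 2))).
  apply Rmult_le_compat; try apply Rabs_pos; [| |apply Rabs_cos_le_1].
  - apply Rmult_le_pos; [lra|apply Rabs_pos].
  - apply Rmult_le_compat_l; [lra|].
    eapply Rle_trans; [apply Rabs_triang|].
    rewrite Rabs_Ropp, !Rabs_mult, Rabs_R1, !Rmult_1_l, !Rabs_inv, <- RPow_abs. lra.
Qed.

Lemma kernel_trunc_corrected_derive_le M m c y : 0 < M -> 0 < m <= Rabs c -> c <= y ->
  Rabs (kernel_trunc_corrected_derive M c) <= 2 * exp y * (1 / m + 1 / m ^ 2) / M.
Proof.
  intros HM [Hm Hmc] Hcy.
  assert (Hc : c <> 0) by (intros ->; rewrite Rabs_R0 in Hmc; lra).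
  eapply Rle_trans; [apply kernel_trunc_corrected_derive_bound; auto|].
  unfold Rdiv. apply Rmult_le_compat_r; [left; apply Rinv_0_lt_compat; auto|].
  apply Rmult_le_compat.
  - generalize (exp_pos c); lra.
  - assert (0 < Rabs c ^ 2) by (apply pow_lt; lra).
    apply Rplus_le_le_0_compat; apply Rmult_le_pos; try lra;
      left; apply Rinv_0_lt_compat; lra.
  - apply Rmult_le_compat_l; [lra|apply exp_le_compat, Hcy].
  - apply Rplus_le_compat; rewrite !Rmult_1_l; apply Rinv_le_contravar; auto.
    + apply pow_lt; auto.
    + apply pow_incr; lra.
Qed.

Lemma kernel_trunc_corrected_variation xi1 xi2 : 0 < xi1 < xi2 \/ xi1 < xi2 < 0 ->
  exists C, forall M, 0 < M ->
    Rabs (kernel_trunc_corrected M xi2 - kernel_trunc_corrected M xi1) <= C / M.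
Proof.
  intros Hs.
  assert (Hnz : forall x, xi1 <= x <= xi2 -> x <> 0) by (intros x Hx; destruct Hs; lra).
  set (m := Rmin (Rabs xi1) (Rabs xi2)).
  assert (Hm : 0 < m) by (apply Rmin_glb_lt; apply Rabs_pos_lt, Hnz; lra).
  assert (Hmx : forall x, xi1 <= x <= xi2 -> m <= Rabs x).
  { intros x Hx. unfold m. destruct Hs.
    - eapply Rle_trans; [apply Rmin_l|]. rewrite !Rabs_right by lra. lra.
    - eapply Rle_trans; [apply Rmin_r|]. rewrite !Rabs_left by lra. lra. }
  set (G := 2 * exp xi2 * (1 / m + 1 / m ^ 2)).
  exists (G * (xi2 - xi1)). intros M HM.
  destruct (MVT_gen (kernel_trunc_corrected M) xi1 xi2 (kernel_trunc_corrected_derive M))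
    as [c [Hc HY]].
  - intros x Hx. rewrite Rmin_left, Rmax_right in Hx by lra.
    apply kernel_trunc_corrected_is_derive; [apply Hnz|]; lra.
  - intros x Hx. rewrite Rmin_left, Rmax_right in Hx by lra.
    apply derivable_continuous_pt. eexists. apply is_derive_Reals.
    apply kernel_trunc_corrected_is_derive; [apply Hnz|]; lra.
  - rewrite Rmin_left, Rmax_right in Hc by lra.
    pose proof (kernel_trunc_corrected_derive_le M m c xi2 HM (conj Hm (Hmx c Hc))
                  ltac:(lra)).
    rewrite HY, Rabs_mult, (Rabs_right (xi2 - xi1)) by lra.
    replace (G * (xi2 - xi1) / M) with (G / M * (xi2 - xi1)) by (field; lra).
    apply Rmult_le_compat_r; [lra|exact H].
Qed.

Lemma exp_kernel_trunc_variation xi1 xi2 : 0 < xi1 < xi2 \/ xi1 < xi2 < 0 ->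
  exists C, forall M, 0 < M ->
    Rabs (exp xi2 * kernel_trunc M xi2 - exp xi1 * kernel_trunc M xi1) <= C / M.
Proof.
  intros Hs. destruct (kernel_trunc_corrected_variation xi1 xi2 Hs) as [C HC].
  assert (Hb : forall M x, 0 < M -> x <> 0 ->
             Rabs (2 * exp x / x * cos (M * x) / M) <= 2 * exp x / Rabs x / M).
  { intros M x HM Hx. pose proof (exp_pos x).
    assert (0 < Rabs x) by (apply Rabs_pos_lt; auto).
    unfold Rdiv. rewrite !Rabs_mult, !Rabs_inv, (Rabs_right 2), (Rabs_right (exp x)),
      (Rabs_right M) by lra.
    rewrite <- (Rmult_1_r (2 * exp x * / Rabs x)) at 2.
    apply Rmult_le_compat_r; [left; apply Rinv_0_lt_compat; auto|].
    apply Rmult_le_compat_l; [|apply Rabs_cos_le_1].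
    apply Rmult_le_pos; [lra|left; apply Rinv_0_lt_compat; auto]. }
  assert (H1 : xi1 <> 0) by (destruct Hs; lra). assert (H2 : xi2 <> 0) by (destruct Hs; lra).
  exists (C + 2 * exp xi1 / Rabs xi1 + 2 * exp xi2 / Rabs xi2). intros M HM.
  pose proof (HC M HM). pose proof (Hb M xi1 HM H1). pose proof (Hb M xi2 HM H2).
  pose proof (Rabs_pos_lt xi1 H1). pose proof (Rabs_pos_lt xi2 H2).
  unfold kernel_trunc_corrected in *.
  set (b1 := 2 * exp xi1 / xi1 * cos (M * xi1) / M) in *.
  set (b2 := 2 * exp xi2 / xi2 * cos (M * xi2) / M) in *.
  replace (exp xi2 * kernel_trunc M xi2 - exp xi1 * kernel_trunc M xi1) with
    (exp xi2 * kernel_trunc M xi2 + b2 - (exp xi1 * kernel_trunc M xi1 + b1) + b1 + - b2)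
    by ring.
  replace ((C + 2 * exp xi1 / Rabs xi1 + 2 * exp xi2 / Rabs xi2) / M) with
    (C / M + 2 * exp xi1 / Rabs xi1 / M + 2 * exp xi2 / Rabs xi2 / M) by (field; side_conditions).
  eapply Rle_trans; [apply Rabs_triang|]. rewrite Rabs_Ropp.
  eapply Rle_trans; [apply Rplus_le_compat_r, Rabs_triang|]. lra.
Qed.

Lemma Rabs_le_all_eq0 D : (forall e, 0 < e -> Rabs D <= e) -> D = 0.
Proof.
  intros H. destruct (Req_dec D 0) as [|HD]; auto.
  apply Rabs_pos_lt in HD. pose proof (H (Rabs D / 2) ltac:(lra)). lra.
Qed.

Lemma exp_kernel_int_const xi1 xi2 : 0 < xi1 < xi2 \/ xi1 < xi2 < 0 ->
  exp xi2 * kernel_int xi2 = exp xi1 * kernel_int xi1.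
Proof.
  intros Hs. apply Rminus_diag_uniq, Rabs_le_all_eq0. intros eps Heps.
  destruct (exp_kernel_trunc_variation xi1 xi2 Hs) as [C HC].
  assert (H1 : xi1 <> 0) by (destruct Hs; lra). assert (H2 : xi2 <> 0) by (destruct Hs; lra).
  pose proof (exp_pos xi1). pose proof (exp_pos xi2).
  set (e := eps / (3 * (exp xi1 + exp xi2))).
  assert (He : 0 < e) by (unfold e; apply Rdiv_lt_0_compat; lra).
  destruct (improper_int_elim2 _ _ _ _ (kernel_int_spec xi1 H1) (kernel_int_spec xi2 H2) e He)
    as [M0 [HM0 HM]].
  set (M := Rmax M0 (3 * Rabs C / eps + 1)).
  assert (HC0 : 0 <= 3 * Rabs C / eps)
    by (apply Rdiv_le_0_compat; [generalize (Rabs_pos C)|]; lra).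
  assert (HM1 : M0 <= M) by apply Rmax_l.
  assert (HM2 : 3 * Rabs C / eps + 1 <= M) by apply Rmax_r.
  destruct (HM M HM1) as [_ [A1 [_ A2]]]. fold (kernel_trunc M xi1) (kernel_trunc M xi2) in *.
  pose proof (HC M ltac:(lra)).
  assert (C / M <= eps / 3).
  { apply Rle_trans with (Rabs C / M).
    - unfold Rdiv. apply Rmult_le_compat_r; [left; apply Rinv_0_lt_compat; lra|apply Rle_abs].
    - apply Rmult_le_reg_r with (3 * M / eps); [apply Rdiv_lt_0_compat; lra|].
      replace (Rabs C / M * (3 * M / eps)) with (3 * Rabs C / eps) by (field; lra).
      replace (eps / 3 * (3 * M / eps)) with M by (field; lra). lra. }
  replace (exp xi2 * kernel_int xi2 - exp xi1 * kernel_int xi1) with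
    (exp xi2 * - (kernel_trunc M xi2 - kernel_int xi2)
     + exp xi1 * (kernel_trunc M xi1 - kernel_int xi1)
     + (exp xi2 * kernel_trunc M xi2 - exp xi1 * kernel_trunc M xi1)) by ring.
  eapply Rle_trans; [apply Rabs_triang|].
  eapply Rle_trans; [apply Rplus_le_compat_r, Rabs_triang|].
  rewrite !Rabs_mult, Rabs_Ropp, (Rabs_right (exp xi1)), (Rabs_right (exp xi2)) by lra.
  assert (exp xi2 * Rabs (kernel_trunc M xi2 - kernel_int xi2) <= exp xi2 * e)
    by (apply Rmult_le_compat_l; lra).
  assert (exp xi1 * Rabs (kernel_trunc M xi1 - kernel_int xi1) <= exp xi1 * e)
    by (apply Rmult_le_compat_l; lra).
  assert (exp xi2 * e + exp xi1 * e = eps / 3) by (unfold e; field; lra).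
  lra.
Qed.

(* [exp xi * kernel_int xi] is constant for [xi < 0] but [exp xi -> 0] as [xi -> -oo]
   while [kernel_int] stays bounded. *)
Lemma kernel_int_neg xi : xi < 0 -> kernel_int xi = 0.
Proof.
  intros Hxi.
  assert (Hz : exp xi * kernel_int xi = 0).
  { apply Rabs_le_all_eq0. intros eps Heps.
    set (y := xi - 1 - 12 / eps).
    assert (0 < 12 / eps) by (apply Rdiv_lt_0_compat; lra).
    rewrite (exp_kernel_int_const y xi) by (right; unfold y; lra).
    pose proof (kernel_int_bound y ltac:(rewrite Rabs_left; unfold y; lra)).
    rewrite Rabs_mult, Rabs_right by (apply Rle_ge; left; apply exp_pos).
    assert (exp y <= eps / 12).
    { pose proof (exp_ineq1_le (- y)). pose proof (exp_pos y).
      assert (exp y * exp (- y) = 1) by (rewrite <- exp_plus, Rplus_opp_r; apply exp_0).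
      apply Rmult_le_reg_r with (12 / eps); [lra|].
      replace (eps / 12 * (12 / eps)) with 1 by (field; lra).
      assert (12 / eps <= 1 + - y) by (unfold y; lra). nra. }
    apply Rle_trans with (eps / 12 * 12); [|lra].
    apply Rmult_le_compat; auto using Rabs_pos. left; apply exp_pos. }
  apply Rmult_integral in Hz. destruct Hz as [Hz|]; auto.
  pose proof (exp_pos xi). lra.
Qed.

Definition kappa := exp 1 * kernel_int 1.

Lemma kernel_int_pos xi : 0 < xi -> kernel_int xi = kappa * exp (- xi).
Proof.
  intros Hxi.
  assert (E : exp xi * kernel_int xi = kappa).
  { unfold kappa. destruct (Rtotal_order xi 1) as [H|[->|H]]; auto.
    - symmetry. apply exp_kernel_int_const. lra.
    - apply exp_kernel_int_const. lra. }
  rewrite <- E, Rmult_comm, <- Rmult_assoc, <- exp_plus, Rplus_opp_l, exp_0. ring.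
Qed.

Definition cos_sixteenth x := 2 * cos (x / 16) / (1 + x ^ 2).

Lemma cos_sixteenth_continuous x : continuous cos_sixteenth x.
Proof.
  apply ex_derive_continuous_R. unfold cos_sixteenth. pose proof (one_plus_sq_pos x).
  auto_derive. side_conditions.
Qed.

Lemma cos_sixteenth_bound x : Rabs (cos_sixteenth x) <= 2 / (1 + x ^ 2).
Proof.
  apply Rabs_div_one_plus_sq_le. rewrite Rabs_mult, Rabs_right by lra.
  generalize (Rabs_cos_le_1 (x / 16)). lra.
Qed.

Lemma RInt_cos_sixteenth_center : 21 / 16 <= RInt cos_sixteenth (- 8) 8.
Proof.
  assert (Ea : ex_RInt (fun x => 1 / (1 + x ^ 2)) (- 8) 8) by (eexists; apply is_RInt_atan).
  apply Rle_trans with (RInt (fun x => 7 / 4 * (1 / (1 + x ^ 2))) (- 8) 8).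
  - rewrite RInt_scal_R, (is_RInt_unique _ _ _ _ (is_RInt_atan (- 8) 8)) by auto.
    assert (atan 1 < atan 8) by (apply atan_increasing; lra).
    assert (atan (- 8) < atan 0) by (apply atan_increasing; lra).
    rewrite atan_1, atan_0 in *. pose proof PI2_3_2. lra.
  - apply RInt_le; [lra|apply ex_RInt_scal_R, Ea|
      apply ex_RInt_continuous_R, cos_sixteenth_continuous|].
    intros x Hx. unfold cos_sixteenth.
    assert (7 / 8 <= cos (x / 16)).
    { pose proof (cos_ge_1_sq (x / 16)). assert (x ^ 2 <= 64) by nra.
      replace ((x / 16) ^ 2) with (x ^ 2 / 256) in * by field. lra. }
    rewrite Rmult_div_assoc, Rmult_1_r. apply div_one_plus_sq_le. lra.
Qed.

Lemma RInt_cos_sixteenth_ge M : 8 <= M -> 13 / 16 <= RInt cos_sixteenth (- M) M.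
Proof.
  intros HM.
  assert (E : forall a b, ex_RInt cos_sixteenth a b)
    by (intros; apply ex_RInt_continuous_R, cos_sixteenth_continuous).
  rewrite <- (RInt_Chasles_R _ (- M) (- 8) M), <- (RInt_Chasles_R _ (- 8) 8 M) by auto.
  pose proof (dominated_RInt_tail_neg _ 2 E cos_sixteenth_bound 8 M ltac:(lra)).
  pose proof (dominated_RInt_tail_pos _ 2 E cos_sixteenth_bound 8 M ltac:(lra)).
  pose proof RInt_cos_sixteenth_center.
  replace (- (8)) with (- 8) in * by ring.
  apply Rabs_le_between in H. apply Rabs_le_between in H0. lra.
Qed.

(* Adding [kernel (1/16)] and [kernel (-1/16)] cancels the odd part, and
   [kernel_int (-1/16) = 0]; hence [kernel_int (1/16) = int cos_sixteenth > 0]. *)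
Lemma kappa_pos : 0 < kappa.
Proof.
  assert (Hsum : improper_int cos_sixteenth (kernel_int (/ 16) + kernel_int (- / 16))).
  { replace (kernel_int (/ 16) + kernel_int (- / 16))
      with (1 * kernel_int (/ 16) + 1 * kernel_int (- / 16)) by ring.
    apply improper_int_ext with (2 := improper_int_lin _ _ _ _ 1 1
      (kernel_int_spec (/ 16) ltac:(lra)) (kernel_int_spec (- / 16) ltac:(lra))).
    intros x. unfold kernel, cos_sixteenth.
    replace (x * - / 16) with (- (x / 16)) by field. replace (x * / 16) with (x / 16) by field.
    rewrite cos_neg, sin_neg. field. pose proof (one_plus_sq_pos x); lra. }
  rewrite (kernel_int_neg (- / 16)), kernel_int_pos, Rplus_0_r in Hsum by lra.
  pose proof (improper_int_ge_truncation _ _ _ 8 Hsum RInt_cos_sixteenth_ge).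
  pose proof (exp_pos (- / 16)). nra.
Qed.

(** * Fourier transforms of rational profiles *)

Lemma improper_int_odd_0 f : (forall x, f (- x) = - f x) ->
  (exists l, improper_int f l) -> improper_int f 0.
Proof.
  intros Hodd [l Hl]. replace 0 with l; auto. apply (improper_int_odd f l); auto.
Qed.

Lemma has_FT_ext f g xi z : (forall x, f x = g x) -> has_FT f xi z -> has_FT g xi z.
Proof.
  intros H [H1 H2]. split; eapply improper_int_ext; eauto; intros x; simpl; rewrite H; auto.
Qed.

Lemma has_FT_lin f g xi z1 z2 a b : has_FT f xi z1 -> has_FT g xi z2 ->
  has_FT (fun x => Cadd (Cmul a (f x)) (Cmul b (g x))) xi (Cadd (Cmul a z1) (Cmul b z2)).
Proof.
  intros [F1 F2] [G1 G2].
  destruct a as [a1 a2], b as [b1 b2], z1 as [u1 v1], z2 as [u2 v2].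
  unfold has_FT, cimproper_int, Cadd, Cmul, Cexpi in *. cbn [fst snd] in *. split.
  - pose proof (improper_int_lin _ _ _ _ 1 1 (improper_int_lin _ _ _ _ a1 (- a2) F1 F2)
                  (improper_int_lin _ _ _ _ b1 (- b2) G1 G2)) as L.
    eapply improper_int_ext; [|replace (a1 * u1 - a2 * v1 + (b1 * u2 - b2 * v2)) with
      (1 * (a1 * u1 + - a2 * v1) + 1 * (b1 * u2 + - b2 * v2)) by ring; exact L].
    intros x. cbv beta. ring.
  - pose proof (improper_int_lin _ _ _ _ 1 1 (improper_int_lin _ _ _ _ a1 a2 F2 F1)
                  (improper_int_lin _ _ _ _ b1 b2 G2 G1)) as L.
    eapply improper_int_ext; [|replace (a1 * v1 + a2 * u1 + (b1 * v2 + b2 * u2)) with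
      (1 * (a1 * v1 + a2 * u1) + 1 * (b1 * v2 + b2 * u2)) by ring; exact L].
    intros x. cbv beta. ring.
Qed.

Lemma has_FT_scal f xi z a : has_FT f xi z -> has_FT (fun x => Cmul a (f x)) xi (Cmul a z).
Proof.
  intros H. pose proof (has_FT_lin f f xi z z a C0 H H) as L.
  replace (Cmul a z) with (Cadd (Cmul a z) (Cmul C0 z))
    by (destruct z, a; unfold Cmul, Cadd, C0; simpl; f_equal; ring).
  eapply has_FT_ext; [|exact L].
  intros x. cbv beta. destruct (f x), a. unfold Cmul, Cadd, C0; simpl. f_equal; ring.
Qed.

Lemma has_FT_add f g xi z1 z2 : has_FT f xi z1 -> has_FT g xi z2 ->
  has_FT (fun x => Cadd (f x) (g x)) xi (Cadd z1 z2).
Proof.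
  intros Hf Hg. pose proof (has_FT_lin f g xi z1 z2 (1, 0) (1, 0) Hf Hg) as L.
  replace (Cadd z1 z2) with (Cadd (Cmul (1, 0) z1) (Cmul (1, 0) z2))
    by (destruct z1, z2; unfold Cmul, Cadd; simpl; f_equal; ring).
  eapply has_FT_ext; [|exact L]. intros x. cbv beta.
  destruct (f x), (g x). unfold Cmul, Cadd; simpl. f_equal; ring.
Qed.

Lemma Cexpi_mul a b w : Cmul (Cexpi a) (Cmul (Cexpi b) w) = Cmul (Cexpi (a + b)) w.
Proof.
  destruct w. unfold Cmul, Cexpi; simpl. rewrite cos_plus, sin_plus. f_equal; ring.
Qed.

Lemma has_FT_shift f xi z p : has_FT f xi z ->
  has_FT (fun x => f (x - p)) xi (Cmul (Cexpi (- (p * xi))) z).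
Proof.
  intros H. destruct (has_FT_scal f xi z (Cexpi (- (p * xi))) H) as [H1 H2].
  split; [apply improper_int_ext with (2 := improper_int_shift _ _ p H1)
         |apply improper_int_ext with (2 := improper_int_shift _ _ p H2)];
    intros x; cbv beta; rewrite Cexpi_mul; do 3 f_equal; ring.
Qed.

Lemma has_FT_modulated_shift E P p xi z : has_FT P xi z ->
  has_FT (fun x => Cmul E (P (x - p))) xi (Cmul E (Cmul (Cexpi (- (p * xi))) z)).
Proof. intros H. apply has_FT_scal, has_FT_shift, H. Qed.

Definition inv_x_plus_i (x : R) : Cplx := (x / (1 + x ^ 2), -1 / (1 + x ^ 2)).
Definition inv_x_minus_i (x : R) : Cplx := (x / (1 + x ^ 2), 1 / (1 + x ^ 2)).
Definition inv_x_plus_i_sq (x : R) : Cplx :=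
  ((x ^ 2 - 1) / (1 + x ^ 2) ^ 2, - 2 * x / (1 + x ^ 2) ^ 2).

Definition odd_kernel xi x := (x * cos (x * xi) - sin (x * xi)) / (1 + x ^ 2).

Lemma odd_kernel_int_0 xi : xi <> 0 -> improper_int (odd_kernel xi) 0.
Proof.
  intros Hxi. apply improper_int_odd_0.
  { intros x. unfold odd_kernel. replace (- x * xi) with (- (x * xi)) by ring.
    rewrite cos_neg, sin_neg. replace ((- x) ^ 2) with (x ^ 2) by ring.
    field. pose proof (one_plus_sq_pos x); lra. }
  destruct (improper_int_by_parts
    (fun x => x * sin (x * xi) / (xi * (1 + x ^ 2)))
    (fun x => x * cos (x * xi) / (1 + x ^ 2)
              + (1 - x ^ 2) * sin (x * xi) / (xi * (1 + x ^ 2) ^ 2))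
    (fun x => - sin (x * xi) / (1 + x ^ 2)
              + - ((1 - x ^ 2) * sin (x * xi)) / (xi * (1 + x ^ 2) ^ 2))
    (2 / Rabs xi) (1 + 1 / Rabs xi)) as [l Hl].
  - intros x. pose proof (one_plus_sq_pos x). auto_derive; side_conditions. field. side_conditions.
  - intros x. apply ex_derive_continuous_R. pose proof (one_plus_sq_pos x).
    auto_derive. side_conditions.
  - intros x. apply Rabs_div_scal_one_plus_sq_le, Rabs_sin_le_1. auto.
  - intros x. apply ex_derive_continuous_R. pose proof (one_plus_sq_pos x).
    auto_derive. side_conditions.
  - intros x. apply Rabs_plus_div_one_plus_sq_le.
    + apply Rabs_div_one_plus_sq_le. rewrite Rabs_Ropp. apply Rabs_sin_le_1.
    + apply Rabs_div_one_plus_sq2_le; auto. rewrite Rabs_Ropp, Rmult_comm.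
      apply Rabs_mult_le; [apply Rabs_sin_le_1|apply Rabs_one_minus_sq_le].
  - exists l. apply improper_int_ext with (2 := Hl). intros x. unfold odd_kernel.
    field. pose proof (one_plus_sq_pos x); side_conditions.
Qed.

Lemma has_FT_inv_x_plus_i xi : xi <> 0 -> has_FT inv_x_plus_i xi (0, - kernel_int xi).
Proof.
  intros Hxi. split; simpl.
  - apply improper_int_ext with (2 := odd_kernel_int_0 xi Hxi). intros x.
    unfold odd_kernel, Cmul, Cexpi, inv_x_plus_i; simpl. rewrite cos_neg, sin_neg.
    field. pose proof (one_plus_sq_pos x); lra.
  - replace (- kernel_int xi) with (-1 * kernel_int xi) by ring.
    apply improper_int_ext with (2 := improper_int_scal _ _ (-1) (kernel_int_spec xi Hxi)).
    intros x. unfold kernel, Cmul, Cexpi, inv_x_plus_i; simpl. rewrite cos_neg, sin_neg.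
    field. pose proof (one_plus_sq_pos x); lra.
Qed.

Lemma has_FT_inv_x_minus_i xi : xi <> 0 -> has_FT inv_x_minus_i xi (0, kernel_int (- xi)).
Proof.
  intros Hxi. split; simpl.
  - apply improper_int_ext with (2 := odd_kernel_int_0 (- xi) ltac:(lra)). intros x.
    unfold odd_kernel, Cmul, Cexpi, inv_x_minus_i; simpl.
    replace (x * - xi) with (- (x * xi)) by ring. rewrite cos_neg, sin_neg.
    field. pose proof (one_plus_sq_pos x); lra.
  - apply improper_int_ext with (2 := kernel_int_spec (- xi) ltac:(lra)). intros x.
    unfold kernel, Cmul, Cexpi, inv_x_minus_i; simpl.
    replace (x * - xi) with (- (x * xi)) by ring. rewrite cos_neg, sin_neg.
    field. pose proof (one_plus_sq_pos x); lra.
Qed.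

Lemma Rabs_sin_minus_id_cos_div_le x xi :
  Rabs ((sin (x * xi) - x * cos (x * xi)) / (1 + x ^ 2)) <= 2 / (1 + Rabs x).
Proof.
  pose proof (one_plus_sq_pos x). pose proof (Rabs_pos x).
  rewrite Rabs_div_one_plus_sq.
  assert (Rabs (sin (x * xi) - x * cos (x * xi)) <= 1 + Rabs x).
  { eapply Rle_trans; [apply Rabs_triang|]. rewrite Rabs_Ropp, Rabs_mult.
    generalize (Rabs_sin_le_1 (x * xi)) (Rabs_cos_le_1 (x * xi)). nra. }
  apply Rle_trans with ((1 + Rabs x) / (1 + x ^ 2)); [apply div_one_plus_sq_le; lra|].
  apply Rmult_le_reg_r with ((1 + x ^ 2) * (1 + Rabs x)); [nra|].
  replace ((1 + Rabs x) / (1 + x ^ 2) * ((1 + x ^ 2) * (1 + Rabs x)))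
    with ((1 + Rabs x) * (1 + Rabs x)) by (field; lra).
  replace (2 / (1 + Rabs x) * ((1 + x ^ 2) * (1 + Rabs x))) with (2 * (1 + x ^ 2))
    by (field; lra).
  rewrite <- (pow2_abs x). pose proof (pow2_ge_0 (Rabs x - 1)). nra.
Qed.

Lemma inv_x_plus_i_sq_FT_re xi : xi <> 0 -> improper_int
  (fun x => ((x ^ 2 - 1) * cos (x * xi) - 2 * x * sin (x * xi)) / (1 + x ^ 2) ^ 2)
  (- xi * kernel_int xi).
Proof.
  intros Hxi.
  apply improper_int_ext with (fun x =>
    (((x ^ 2 - 1) * cos (x * xi) - 2 * x * sin (x * xi)) / (1 + x ^ 2) ^ 2
     + xi * kernel xi x) + - xi * kernel xi x).
  { intros x. ring. }
  apply (improper_int_derive_plus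
           (fun x => (sin (x * xi) - x * cos (x * xi)) / (1 + x ^ 2)) _ _ _ 2).
  - intros x. unfold kernel. pose proof (one_plus_sq_pos x).
    auto_derive; side_conditions. field. side_conditions.
  - intros x. apply ex_derive_continuous_R. unfold kernel. pose proof (one_plus_sq_pos x).
    auto_derive. side_conditions.
  - intros x. apply Rabs_sin_minus_id_cos_div_le.
  - apply improper_int_scal, kernel_int_spec, Hxi.
Qed.

Lemma inv_x_plus_i_sq_FT_im xi : improper_int
  (fun x => - (2 * x * cos (x * xi) + (x ^ 2 - 1) * sin (x * xi)) / (1 + x ^ 2) ^ 2) 0.
Proof.
  apply improper_int_odd_0.
  { intros x. replace (- x * xi) with (- (x * xi)) by ring. rewrite cos_neg, sin_neg.
    field. pose proof (one_plus_sq_pos x). side_conditions. }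
  apply (continuous_dominated_improper_int _ (2 / Rabs 1)).
  - intros x. apply ex_derive_continuous_R. pose proof (one_plus_sq_pos x).
    auto_derive. side_conditions.
  - intros x. rewrite <- (Rmult_1_l ((1 + x ^ 2) ^ 2)).
    unfold Rdiv at 1. rewrite <- Ropp_mult_distr_l, Rabs_Ropp.
    apply Rabs_div_one_plus_sq2_le; [lra|].
    eapply Rle_trans; [apply Rabs_triang|]. rewrite !Rabs_mult, (Rabs_right 2) by lra.
    replace (Rabs (x ^ 2 - 1)) with (Rabs (1 - x ^ 2)) by (rewrite <- Rabs_Ropp; f_equal; ring).
    pose proof (Rabs_sin_le_1 (x * xi)). pose proof (Rabs_cos_le_1 (x * xi)).
    pose proof (Rabs_pos x). pose proof (Rabs_one_minus_sq_le x).
    pose proof (pow2_ge_0 (Rabs x - 1)). rewrite <- (pow2_abs x) in *.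
    assert (Rabs x * Rabs (cos (x * xi)) <= Rabs x) by nra.
    assert (Rabs (1 - Rabs x ^ 2) * Rabs (sin (x * xi)) <= Rabs (1 - Rabs x ^ 2))
      by (pose proof (Rabs_pos (1 - Rabs x ^ 2)); nra).
    nra.
Qed.

Lemma has_FT_inv_x_plus_i_sq xi : xi <> 0 ->
  has_FT inv_x_plus_i_sq xi (- xi * kernel_int xi, 0).
Proof.
  intros Hxi. split; simpl.
  - apply improper_int_ext with (2 := inv_x_plus_i_sq_FT_re xi Hxi). intros x.
    unfold Cmul, Cexpi, inv_x_plus_i_sq; simpl. rewrite cos_neg, sin_neg.
    field. pose proof (one_plus_sq_pos x); side_conditions.
  - apply improper_int_ext with (2 := inv_x_plus_i_sq_FT_im xi). intros x.
    unfold Cmul, Cexpi, inv_x_plus_i_sq; simpl. rewrite cos_neg, sin_neg.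
    field. pose proof (one_plus_sq_pos x); side_conditions.
Qed.

(** * Sobolev norms of exponentially decaying spectra *)

(* The integrand of [2 pi ||f||_{H^s}^2] when [|hat f xi|^2 = q xi * exp (- 2 xi) 1_{xi > 0}]. *)
Definition sobolev_integrand (s : R) (q : R -> R) (xi : R) :=
  if Rlt_dec 0 xi then Rpower (1 + xi ^ 2) s * exp (- xi) ^ 2 * q xi else 0.

Lemma sobolev_weight_pos s xi : 0 < Rpower (1 + xi ^ 2) s * exp (- xi) ^ 2.
Proof. apply Rmult_lt_0_compat; [apply exp_pos|apply pow_lt, exp_pos]. Qed.

Lemma sobolev_weight_continuous s xi :
  continuous (fun xi => Rpower (1 + xi ^ 2) s * exp (- xi) ^ 2) xi.
Proof.
  apply ex_derive_continuous_R. unfold Rpower. pose proof (one_plus_sq_pos xi).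
  auto_derive. side_conditions.
Qed.

Lemma ln_le_sub_1 y : 0 < y -> ln y <= y - 1.
Proof. intros Hy. generalize (exp_ineq1_le (ln y)). rewrite exp_ln by auto. lra. Qed.

(* With [g = |s| + 2]: [(s + 2) ln (1 + xi^2) - 2 xi <= 2 g ln (1 + xi) - 2 xi], and
   [ln (1 + xi) <= (1 + xi) / g - 1 + ln g]. *)
Lemma sobolev_weight_sq_bound s : exists C, 0 < C /\ forall xi, 0 <= xi ->
  Rpower (1 + xi ^ 2) s * exp (- xi) ^ 2 * (1 + xi ^ 2) ^ 2 <= C.
Proof.
  set (g := Rabs s + 2).
  assert (Hg : 2 <= g) by (unfold g; generalize (Rabs_pos s); lra).
  exists (exp (2 - 2 * g + 2 * g * ln g)). split; [apply exp_pos|].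
  intros xi Hxi. pose proof (one_plus_sq_pos xi).
  replace (Rpower (1 + xi ^ 2) s * exp (- xi) ^ 2 * (1 + xi ^ 2) ^ 2)
    with (exp ((s + 2) * ln (1 + xi ^ 2) - 2 * xi)).
  2:{ unfold Rpower. rewrite <- (exp_ln ((1 + xi ^ 2) ^ 2)) by (apply pow_lt; lra).
      rewrite ln_pow by lra. replace (exp (- xi) ^ 2) with (exp (- xi) * exp (- xi)) by ring.
      rewrite <- !exp_plus. f_equal. change (INR 2) with 2. ring. }
  apply exp_le_compat.
  assert (L0 : 0 <= ln (1 + xi ^ 2)).
  { rewrite <- ln_1. apply ln_le; [lra|generalize (pow2_ge_0 xi); lra]. }
  assert (L1 : ln (1 + xi ^ 2) <= 2 * ln (1 + xi)).
  { replace (2 * ln (1 + xi)) with (ln ((1 + xi) ^ 2))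
      by (rewrite ln_pow by lra; change (INR 2) with 2; ring).
    apply ln_le; [lra|]. nra. }
  assert (L2 : ln (/ g * (1 + xi)) <= / g * (1 + xi) - 1).
  { apply ln_le_sub_1. apply Rmult_lt_0_compat; [apply Rinv_0_lt_compat|]; lra. }
  rewrite ln_mult, ln_Rinv in L2 by (try apply Rinv_0_lt_compat; lra).
  assert (L3 : (s + 2) * ln (1 + xi ^ 2) <= g * ln (1 + xi ^ 2)).
  { apply Rmult_le_compat_r; auto. unfold g. generalize (Rle_abs s); lra. }
  assert (L4 : g * ln (1 + xi) <= 1 + xi - g + g * ln g).
  { replace (1 + xi - g + g * ln g) with (g * (/ g * (1 + xi) - 1 + ln g)) by (field; lra).
    apply Rmult_le_compat_l; lra. }
  nra.
Qed.

Lemma ex_RInt_sobolev_integrand s q a b : (forall xi, continuous q xi) ->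
  ex_RInt (sobolev_integrand s q) a b.
Proof.
  intros Hq.
  assert (Hc : forall xi, continuous (fun xi => Rpower (1 + xi ^ 2) s * exp (- xi) ^ 2 * q xi) xi)
    by (intros xi; apply (continuous_mult (K := R_AbsRing));
          [apply sobolev_weight_continuous|apply Hq]).
  assert (Hneg : forall a b, a <= b <= 0 -> ex_RInt (sobolev_integrand s q) a b).
  { intros a' b' Hab. apply ex_RInt_ext with (fun _ => 0).
    - intros x Hx. rewrite Rmin_left, Rmax_right in Hx by lra.
      unfold sobolev_integrand. destruct (Rlt_dec 0 x); lra.
    - apply (ex_RInt_const (V := R_NormedModule)). }
  assert (Hpos : forall a b, 0 <= a <= b -> ex_RInt (sobolev_integrand s q) a b).
  { intros a' b' Hab. apply ex_RInt_ext with (2 := ex_RInt_continuous_R _ a' b' Hc).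
    intros x Hx. rewrite Rmin_left, Rmax_right in Hx by lra.
    unfold sobolev_integrand. destruct (Rlt_dec 0 x); lra. }
  assert (Hle : forall a b, a <= b -> ex_RInt (sobolev_integrand s q) a b).
  { intros a' b' Hab. destruct (Rle_dec b' 0); [apply Hneg; lra|].
    destruct (Rle_dec 0 a'); [apply Hpos; lra|].
    apply (ex_RInt_Chasles (V := R_NormedModule) _ a' 0 b'); [apply Hneg|apply Hpos]; lra. }
  destruct (Rle_dec a b); [apply Hle; lra|]. apply ex_RInt_swap, Hle. lra.
Qed.

Lemma sobolev_integrand_improper_int s q Q0 : (forall xi, continuous q xi) ->
  (forall xi, Rabs (q xi) <= Q0 * (1 + xi ^ 2)) ->
  exists I, improper_int (sobolev_integrand s q) I.
Proof.
  intros Hc Hq. destruct (sobolev_weight_sq_bound s) as [C [HC HCb]].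
  assert (HQ : 0 <= Q0) by (generalize (Hq 0) (Rabs_pos (q 0)); simpl; intros; nra).
  apply (dominated_improper_int _ (C * Q0)).
  { intros a b. apply ex_RInt_sobolev_integrand, Hc. }
  intros xi. unfold sobolev_integrand. pose proof (one_plus_sq_pos xi).
  destruct (Rlt_dec 0 xi).
  - pose proof (sobolev_weight_pos s xi).
    rewrite Rabs_mult, (Rabs_right (_ * _)) by lra.
    apply Rmult_le_reg_r with (1 + xi ^ 2); auto.
    replace (C * Q0 / (1 + xi ^ 2) * (1 + xi ^ 2)) with (C * Q0) by (field; lra).
    apply Rle_trans with
      (Rpower (1 + xi ^ 2) s * exp (- xi) ^ 2 * (1 + xi ^ 2) ^ 2 * Q0).
    + replace (Rpower (1 + xi ^ 2) s * exp (- xi) ^ 2 * (1 + xi ^ 2) ^ 2 * Q0) with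
        (Rpower (1 + xi ^ 2) s * exp (- xi) ^ 2 * (Q0 * (1 + xi ^ 2)) * (1 + xi ^ 2)) by ring.
      apply Rmult_le_compat_r; [lra|]. apply Rmult_le_compat_l; [lra|auto].
    + apply Rmult_le_compat_r; auto. apply HCb. lra.
  - rewrite Rabs_R0. apply Rdiv_le_0_compat; [nra|lra].
Qed.

Lemma sobolev_integrand_bounded_improper_int s (q : R -> R) K :
  (forall xi, continuous q xi) -> (forall xi, 0 <= q xi <= K) ->
  exists I, improper_int (sobolev_integrand s q) I.
Proof.
  intros Hc Hq. apply (sobolev_integrand_improper_int s q K Hc).
  intros xi. destruct (Hq xi). rewrite Rabs_right by lra.
  pose proof (pow2_ge_0 xi). nra.
Qed.

Lemma sobolev_integrand_ge0 s q xi : (forall y, 0 <= q y) -> 0 <= sobolev_integrand s q xi.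
Proof.
  intros H. unfold sobolev_integrand. destruct (Rlt_dec 0 xi); [|lra].
  apply Rmult_le_pos; auto. left; apply sobolev_weight_pos.
Qed.

Lemma sobolev_integrand_le s q q' xi : (forall y, q y <= q' y) ->
  sobolev_integrand s q xi <= sobolev_integrand s q' xi.
Proof.
  intros H. unfold sobolev_integrand. destruct (Rlt_dec 0 xi); [|lra].
  apply Rmult_le_compat_l; auto. left; apply sobolev_weight_pos.
Qed.

Lemma sobolev_integrand_scal s q k I : improper_int (sobolev_integrand s q) I ->
  improper_int (sobolev_integrand s (fun xi => k * q xi)) (k * I).
Proof.
  intros H. apply improper_int_ext with (2 := improper_int_scal _ _ k H).
  intros xi. unfold sobolev_integrand. destruct (Rlt_dec 0 xi); ring.
Qed.

Definition sobolev_mass (s : R) : R :=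
  epsilon (inhabits 0) (fun l => improper_int (sobolev_integrand s (fun _ => 1)) l).

Lemma sobolev_mass_spec s : improper_int (sobolev_integrand s (fun _ => 1)) (sobolev_mass s).
Proof.
  unfold sobolev_mass. apply epsilon_spec, (sobolev_integrand_improper_int s _ 1).
  - intros. apply (continuous_const (U := R_UniformSpace) (V := R_UniformSpace)).
  - intros xi. rewrite Rabs_R1. pose proof (pow2_ge_0 xi). lra.
Qed.

Definition sobolev_weight_min s := exp (- (Rabs s * ln 5)) * exp (- 4).

Lemma sobolev_weight_min_pos s : 0 < sobolev_weight_min s.
Proof. apply Rmult_lt_0_compat; apply exp_pos. Qed.

Lemma sobolev_weight_ge_min s x : 1 <= x <= 2 ->
  sobolev_weight_min s <= Rpower (1 + x ^ 2) s * exp (- x) ^ 2.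
Proof.
  intros Hx. unfold sobolev_weight_min, Rpower.
  apply Rmult_le_compat; try (left; apply exp_pos).
  - apply exp_le_compat.
    assert (L0 : 0 <= ln (1 + x ^ 2)) by (rewrite <- ln_1; apply ln_le; [lra|nra]).
    assert (L5 : ln (1 + x ^ 2) <= ln 5) by (apply ln_le; nra).
    destruct (Rle_dec 0 s).
    + rewrite Rabs_right by lra. nra.
    + rewrite Rabs_left by lra. nra.
  - simpl. rewrite Rmult_1_r, <- exp_plus. apply exp_le_compat. lra.
Qed.

Lemma sobolev_integrand_RInt_ge s q : (forall xi, continuous q xi) ->
  (forall xi, 0 <= q xi) ->
  sobolev_weight_min s * RInt q 1 2 <= RInt (sobolev_integrand s q) 1 2.
Proof.
  intros Hc Hq. rewrite <- RInt_scal_R by (apply ex_RInt_continuous_R, Hc).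
  apply RInt_le; [lra| |apply ex_RInt_sobolev_integrand, Hc|].
  - apply ex_RInt_scal_R, ex_RInt_continuous_R, Hc.
  - intros x Hx. unfold sobolev_integrand. destruct (Rlt_dec 0 x); [|lra].
    apply Rmult_le_compat_r; [apply Hq|]. apply sobolev_weight_ge_min. lra.
Qed.

Lemma sobolev_mass_pos s : 0 < sobolev_mass s.
Proof.
  apply Rlt_le_trans with (sobolev_weight_min s * RInt (fun _ => 1) 1 2).
  - rewrite RInt_const. apply Rmult_lt_0_compat; [apply sobolev_weight_min_pos|].
    change (0 < (2 - 1) * 1). lra.
  - eapply Rle_trans; [apply sobolev_integrand_RInt_ge; intros; [|lra]|].
    + apply (continuous_const (U := R_UniformSpace) (V := R_UniformSpace)).
    + apply improper_int_ge_RInt; [apply sobolev_mass_spec| |lra].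
      intros. apply sobolev_integrand_ge0. intros; lra.
Qed.

(** * Travelling waves *)

Definition FT_inv_x_plus_i (xi : R) : Cplx :=
  if Rlt_dec 0 xi then (0, - (kappa * exp (- xi))) else C0.

Lemma has_FT_inv_x_plus_i_explicit xi : xi <> 0 ->
  has_FT inv_x_plus_i xi (FT_inv_x_plus_i xi).
Proof.
  intros Hxi. replace (FT_inv_x_plus_i xi) with (0, - kernel_int xi).
  - apply has_FT_inv_x_plus_i, Hxi.
  - unfold FT_inv_x_plus_i, C0. destruct (Rlt_dec 0 xi).
    + rewrite kernel_int_pos; auto.
    + rewrite kernel_int_neg by lra. f_equal. ring.
Qed.

Lemma Cnorm2_FT_inv_x_plus_i xi :
  Cnorm2 (FT_inv_x_plus_i xi) = if Rlt_dec 0 xi then kappa ^ 2 * exp (- xi) ^ 2 else 0.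
Proof. unfold FT_inv_x_plus_i, Cnorm2, C0. destruct (Rlt_dec 0 xi); simpl; ring. Qed.

Lemma Cnorm2_ge0 u : 0 <= Cnorm2 u.
Proof. destruct u. unfold Cnorm2; simpl. nra. Qed.

Lemma Cnorm2_mul u v : Cnorm2 (Cmul u v) = Cnorm2 u * Cnorm2 v.
Proof. destruct u, v. unfold Cnorm2, Cmul; simpl. ring. Qed.

Lemma Cnorm2_Cadd_le u v : Cnorm2 (Cadd u v) <= 2 * Cnorm2 u + 2 * Cnorm2 v.
Proof.
  destruct u as [u1 u2], v as [v1 v2]. unfold Cnorm2, Cadd; simpl.
  pose proof (pow2_ge_0 (u1 - v1)). pose proof (pow2_ge_0 (u2 - v2)). nra.
Qed.

Lemma Cnorm2_Cscale_Cexpi a u : Cnorm2 (Cscale a (Cexpi u)) = a ^ 2.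
Proof.
  unfold Cnorm2, Cscale, Cexpi; simpl. pose proof (sin2_cos2 u). unfold Rsqr in H. nra.
Qed.

Lemma Cnorm2_sub_Cscale_Cexpi a b u v :
  Cnorm2 (Csub (Cscale a (Cexpi u)) (Cscale b (Cexpi v)))
  = a ^ 2 + b ^ 2 - 2 * a * b * cos (u - v).
Proof.
  unfold Cnorm2, Csub, Cscale, Cexpi; simpl. rewrite cos_minus.
  pose proof (sin2_cos2 u). pose proof (sin2_cos2 v). unfold Rsqr in *. nra.
Qed.

Lemma Hs_norm_of_FT s f A I :
  (forall xi, xi <> 0 -> has_FT f xi (Cmul (A xi) (FT_inv_x_plus_i xi))) ->
  improper_int (sobolev_integrand s (fun xi => kappa ^ 2 * Cnorm2 (A xi))) I ->
  Hs_norm_is s f (sqrt (I / (2 * PI))).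
Proof.
  intros HF HI. pose proof PI_RGT_0.
  assert (0 <= I).
  { apply (improper_int_ge0 _ _ HI). intros. apply sobolev_integrand_ge0. intros.
    apply Rmult_le_pos; [apply pow2_ge_0|apply Cnorm2_ge0]. }
  split; [apply sqrt_pos|]. exists (fun xi => Cmul (A xi) (FT_inv_x_plus_i xi)).
  split; auto.
  rewrite <- Rsqr_pow2, Rsqr_sqrt by (apply Rdiv_le_0_compat; lra).
  replace (2 * PI * (I / (2 * PI))) with I by (field; lra).
  apply improper_int_ext with (2 := HI). intros xi.
  rewrite Cnorm2_mul, Cnorm2_FT_inv_x_plus_i. unfold sobolev_integrand.
  destruct (Rlt_dec 0 xi); ring.
Qed.

Definition mu (s : R) := kappa * sqrt (sobolev_mass s / (2 * PI)).

Lemma mu_pos s : 0 < mu s.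
Proof.
  apply Rmult_lt_0_compat; [apply kappa_pos|]. apply sqrt_lt_R0, Rdiv_lt_0_compat;
    [apply sobolev_mass_pos|generalize PI_RGT_0; lra].
Qed.

Lemma sqrt_sq_mult k J : 0 <= J -> sqrt (k ^ 2 * J) = Rabs k * sqrt J.
Proof.
  intros HJ. rewrite sqrt_mult_alt by apply pow2_ge_0. rewrite <- Rsqr_pow2, sqrt_Rsqr_abs.
  reflexivity.
Qed.

Lemma Hs_norm_of_FT_const_modulus s f A r :
  (forall xi, xi <> 0 -> has_FT f xi (Cmul (A xi) (FT_inv_x_plus_i xi))) ->
  (forall xi, Cnorm2 (A xi) = r ^ 2) -> Hs_norm_is s f (Rabs r * mu s).
Proof.
  intros HF HA. pose proof PI_RGT_0. pose proof (sobolev_mass_pos s). pose proof kappa_pos.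
  replace (Rabs r * mu s) with (sqrt ((kappa * r) ^ 2 * sobolev_mass s / (2 * PI))).
  - apply (Hs_norm_of_FT s f A); auto.
    apply improper_int_ext with (2 := sobolev_integrand_scal _ _ ((kappa * r) ^ 2) _
                                        (sobolev_mass_spec s)).
    intros xi. unfold sobolev_integrand. rewrite HA. destruct (Rlt_dec 0 xi); ring.
  - assert (0 <= sobolev_mass s / (2 * PI)) by (apply Rdiv_le_0_compat; lra).
    unfold mu. replace ((kappa * r) ^ 2 * sobolev_mass s / (2 * PI))
      with ((kappa * r) ^ 2 * (sobolev_mass s / (2 * PI))) by (field; lra).
    rewrite sqrt_sq_mult, Rabs_mult, (Rabs_right kappa) by lra. ring.
Qed.

Definition wave_amplitude (a w t : R) : Cplx := Cscale a (Cexpi (- (w * t))).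

Definition wave (a w c t x : R) : Cplx := Cmul (wave_amplitude a w t) (inv_x_plus_i (x - c * t)).

Definition wave_phase (a w c t xi : R) : Cplx := Cscale a (Cexpi (- (w * t) - c * t * xi)).

Lemma has_FT_wave a w c t xi : xi <> 0 ->
  has_FT (wave a w c t) xi (Cmul (wave_phase a w c t xi) (FT_inv_x_plus_i xi)).
Proof.
  intros Hxi.
  pose proof (has_FT_scal _ _ _ (wave_amplitude a w t)
    (has_FT_shift _ _ _ (c * t) (has_FT_inv_x_plus_i_explicit xi Hxi))) as F.
  replace (Cmul (wave_phase a w c t xi) (FT_inv_x_plus_i xi)) with
    (Cmul (wave_amplitude a w t) (Cmul (Cexpi (- (c * t * xi))) (FT_inv_x_plus_i xi))).
  - exact F.
  - unfold wave_phase, wave_amplitude. destruct (FT_inv_x_plus_i xi).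
    unfold Cmul, Cscale, Cexpi; simpl.
    replace (- (w * t) - c * t * xi) with (- (w * t) + - (c * t * xi)) by ring.
    rewrite cos_plus, sin_plus. f_equal; ring.
Qed.

Lemma has_FT_wave_sub a1 w1 c1 t1 a2 w2 c2 t2 xi : xi <> 0 ->
  has_FT (fun x => Csub (wave a1 w1 c1 t1 x) (wave a2 w2 c2 t2 x)) xi
    (Cmul (Csub (wave_phase a1 w1 c1 t1 xi) (wave_phase a2 w2 c2 t2 xi)) (FT_inv_x_plus_i xi)).
Proof.
  intros Hxi.
  pose proof (has_FT_lin _ _ _ _ _ (1, 0) (-1, 0)
    (has_FT_wave a1 w1 c1 t1 xi Hxi) (has_FT_wave a2 w2 c2 t2 xi Hxi)) as L.
  replace (Cmul (Csub (wave_phase a1 w1 c1 t1 xi) (wave_phase a2 w2 c2 t2 xi))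
      (FT_inv_x_plus_i xi)) with
    (Cadd (Cmul (1, 0) (Cmul (wave_phase a1 w1 c1 t1 xi) (FT_inv_x_plus_i xi)))
          (Cmul (-1, 0) (Cmul (wave_phase a2 w2 c2 t2 xi) (FT_inv_x_plus_i xi)))).
  - eapply has_FT_ext; [|exact L]. intros x. cbv beta.
    destruct (wave a1 w1 c1 t1 x), (wave a2 w2 c2 t2 x).
    unfold Cmul, Cadd, Csub; simpl. f_equal; ring.
  - destruct (wave_phase a1 w1 c1 t1 xi), (wave_phase a2 w2 c2 t2 xi), (FT_inv_x_plus_i xi).
    unfold Cmul, Cadd, Csub; simpl. f_equal; ring.
Qed.

Lemma Hs_norm_wave s a w c t : Hs_norm_is s (wave a w c t) (Rabs a * mu s).
Proof.
  apply (Hs_norm_of_FT_const_modulus s _ (wave_phase a w c t)).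
  - intros. apply has_FT_wave; auto.
  - intros. apply Cnorm2_Cscale_Cexpi.
Qed.

Lemma Hs_norm_wave_sub_0 s a1 w1 c1 a2 w2 c2 :
  Hs_norm_is s (fun x => Csub (wave a1 w1 c1 0 x) (wave a2 w2 c2 0 x)) (Rabs (a1 - a2) * mu s).
Proof.
  apply (Hs_norm_of_FT_const_modulus s _ (fun xi => Csub (wave_phase a1 w1 c1 0 xi)
                                                         (wave_phase a2 w2 c2 0 xi))).
  - intros. apply has_FT_wave_sub; auto.
  - intros xi. unfold wave_phase. rewrite Cnorm2_sub_Cscale_Cexpi.
    replace (- (w1 * 0) - c1 * 0 * xi - (- (w2 * 0) - c2 * 0 * xi)) with 0 by ring.
    rewrite cos_0. ring.
Qed.

Lemma wave_phase_sub_continuous a1 w1 c1 t1 a2 w2 c2 t2 xi :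
  continuous (fun xi => Cnorm2 (Csub (wave_phase a1 w1 c1 t1 xi) (wave_phase a2 w2 c2 t2 xi)))
    xi.
Proof.
  apply ex_derive_continuous_R. unfold Cnorm2, Csub, wave_phase, Cscale, Cexpi; simpl.
  auto_derive. auto.
Qed.

Lemma Cnorm2_wave_phase_sub_le a1 w1 c1 t1 a2 w2 c2 t2 xi :
  Cnorm2 (Csub (wave_phase a1 w1 c1 t1 xi) (wave_phase a2 w2 c2 t2 xi))
    <= 2 * a1 ^ 2 + 2 * a2 ^ 2.
Proof.
  unfold wave_phase. rewrite Cnorm2_sub_Cscale_Cexpi.
  set (u := - (w1 * t1) - c1 * t1 * xi - (- (w2 * t2) - c2 * t2 * xi)).
  pose proof (COS_bound u). pose proof (pow2_ge_0 (a1 - a2)). pose proof (pow2_ge_0 (a1 + a2)).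
  destruct (Rle_dec 0 (a1 * a2)); nra.
Qed.

Lemma Hs_norm_wave_sub_exists s a1 w1 c1 t1 a2 w2 c2 t2 :
  exists I, improper_int (sobolev_integrand s (fun xi =>
      kappa ^ 2 * Cnorm2 (Csub (wave_phase a1 w1 c1 t1 xi) (wave_phase a2 w2 c2 t2 xi)))) I
    /\ Hs_norm_is s (fun x => Csub (wave a1 w1 c1 t1 x) (wave a2 w2 c2 t2 x))
         (sqrt (I / (2 * PI))).
Proof.
  destruct (sobolev_integrand_bounded_improper_int s (fun xi =>
      kappa ^ 2 * Cnorm2 (Csub (wave_phase a1 w1 c1 t1 xi) (wave_phase a2 w2 c2 t2 xi)))
      (kappa ^ 2 * (2 * a1 ^ 2 + 2 * a2 ^ 2))) as [I HI].
  - intros xi. apply (continuous_mult (K := R_AbsRing)).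
    + apply (continuous_const (U := R_UniformSpace) (V := R_UniformSpace)).
    + apply wave_phase_sub_continuous.
  - intros xi. pose proof (pow2_ge_0 kappa). split.
    + apply Rmult_le_pos; [auto|apply Cnorm2_ge0].
    + apply Rmult_le_compat_l; [auto|apply Cnorm2_wave_phase_sub_le].
  - exists I. split; auto. apply (Hs_norm_of_FT _ _ _ _ (fun xi Hxi => has_FT_wave_sub
      a1 w1 c1 t1 a2 w2 c2 t2 xi Hxi) HI).
Qed.

Lemma Cnorm2_wave_phase_time_sub_le a w c t t0 xi :
  Cnorm2 (Csub (wave_phase a w c t xi) (wave_phase a w c t0 xi))
    <= 2 * a ^ 2 * (w ^ 2 + c ^ 2) * (t - t0) ^ 2 * (1 + xi ^ 2).
Proof.
  unfold wave_phase. rewrite Cnorm2_sub_Cscale_Cexpi.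
  set (u := - (w * t) - c * t * xi - (- (w * t0) - c * t0 * xi)).
  assert (Hu : u ^ 2 = (t - t0) ^ 2 * (w + c * xi) ^ 2) by (unfold u; ring).
  assert ((w + c * xi) ^ 2 <= 2 * (w ^ 2 + c ^ 2) * (1 + xi ^ 2)).
  { pose proof (pow2_ge_0 (w - c * xi)). pose proof (pow2_ge_0 (w * xi)).
    pose proof (pow2_ge_0 c). nra. }
  pose proof (pow2_ge_0 a). pose proof (pow2_ge_0 (t - t0)).
  assert (a ^ 2 * (1 - u ^ 2 / 2) <= a ^ 2 * cos u)
    by (apply Rmult_le_compat_l; [lra|apply cos_ge_1_sq]).
  apply Rle_trans with (a ^ 2 * ((t - t0) ^ 2 * (2 * (w ^ 2 + c ^ 2) * (1 + xi ^ 2)))).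
  - apply Rle_trans with (a ^ 2 * u ^ 2); [nra|].
    apply Rmult_le_compat_l; [lra|]. rewrite Hu. apply Rmult_le_compat_l; lra.
  - right. ring.
Qed.

Lemma Hs_norm_wave_time_sub_le s a w c t0 : exists D, 0 <= D /\ forall t, exists N,
  Hs_norm_is s (fun x => Csub (wave a w c t x) (wave a w c t0 x)) N /\ N <= D * Rabs (t - t0).
Proof.
  pose proof PI_RGT_0.
  destruct (sobolev_integrand_improper_int s (fun xi => 1 + xi ^ 2) 1) as [J HJ].
  { intros x. apply ex_derive_continuous_R. auto_derive. auto. }
  { intros xi. rewrite Rabs_right by (apply Rle_ge, Rlt_le, one_plus_sq_pos). lra. }
  assert (HJ0 : 0 <= J).
  { apply (improper_int_ge0 _ _ HJ). intros. apply sobolev_integrand_ge0.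
    intros. apply Rlt_le, one_plus_sq_pos. }
  set (K := kappa ^ 2 * (2 * a ^ 2 * (w ^ 2 + c ^ 2))).
  assert (HK : 0 <= K).
  { unfold K. apply Rmult_le_pos; [apply pow2_ge_0|].
    pose proof (pow2_ge_0 a). pose proof (pow2_ge_0 w). pose proof (pow2_ge_0 c). nra. }
  exists (sqrt (K * J / (2 * PI))). split; [apply sqrt_pos|]. intros t.
  destruct (Hs_norm_wave_sub_exists s a w c t a w c t0) as [I [HI HN]].
  exists (sqrt (I / (2 * PI))). split; auto.
  assert (I <= (t - t0) ^ 2 * (K * J)).
  { replace ((t - t0) ^ 2 * (K * J)) with ((K * (t - t0) ^ 2) * J) by ring.
    apply (improper_int_le _ _ _ _ HI (sobolev_integrand_scal _ _ _ _ HJ)).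
    intros xi. apply sobolev_integrand_le. intros y. unfold K.
    pose proof (Cnorm2_wave_phase_time_sub_le a w c t t0 y). pose proof (pow2_ge_0 kappa).
    replace (kappa ^ 2 * (2 * a ^ 2 * (w ^ 2 + c ^ 2)) * (t - t0) ^ 2 * (1 + y ^ 2)) with
      (kappa ^ 2 * (2 * a ^ 2 * (w ^ 2 + c ^ 2) * (t - t0) ^ 2 * (1 + y ^ 2))) by ring.
    apply Rmult_le_compat_l; auto. }
  replace (sqrt (K * J / (2 * PI)) * Rabs (t - t0))
    with (sqrt ((t - t0) ^ 2 * (K * J / (2 * PI)))).
  2:{ rewrite sqrt_sq_mult by (apply Rdiv_le_0_compat; nra). ring. }
  apply sqrt_le_1_alt. unfold Rdiv. rewrite <- Rmult_assoc, <- Rmult_assoc.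
  apply Rmult_le_compat_r; [left; apply Rinv_0_lt_compat|]; lra.
Qed.

Lemma Hs_continuous_wave s a w c : forall t0 e, 0 < e -> exists eta, 0 < eta /\
  forall t, Rabs (t - t0) < eta -> exists N,
    Hs_norm_is s (fun x => Csub (wave a w c t x) (wave a w c t0 x)) N /\ N < e.
Proof.
  intros t0 e He. destruct (Hs_norm_wave_time_sub_le s a w c t0) as [D [HD HN]].
  exists (e / (D + 1)). split; [apply Rdiv_lt_0_compat; lra|]. intros t Ht.
  destruct (HN t) as [N [HsN HNt]]. exists N. split; auto.
  apply Rle_lt_trans with (D * (e / (D + 1))).
  - eapply Rle_trans; [exact HNt|]. apply Rmult_le_compat_l; lra.
  - apply Rmult_lt_reg_r with (D + 1); [lra|].
    replace (D * (e / (D + 1)) * (D + 1)) with (D * e) by (field; lra). nra.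
Qed.

(* The oscillating part averages out over [1, 2] once the frequency [b] is large. *)
Lemma RInt_phase_gap_ge a1 a2 A0 b : 0 <= a1 <= a2 -> 4 <= b ->
  a1 ^ 2 <= RInt (fun xi => a1 ^ 2 + a2 ^ 2 - 2 * a1 * a2 * cos (A0 + b * xi)) 1 2.
Proof.
  intros Ha Hb.
  set (G xi := (a1 ^ 2 + a2 ^ 2) * xi - 2 * a1 * a2 * (sin (A0 + b * xi) / b)).
  rewrite (is_RInt_unique _ _ _ (G 2 - G 1)).
  2:{ apply (is_RInt_derive G); intros x _.
      - unfold G. auto_derive; [side_conditions|]. field. lra.
      - apply ex_derive_continuous_R. auto_derive. auto. }
  assert (S : Rabs (sin (A0 + b * 2) - sin (A0 + b * 1)) <= 2).
  { eapply Rle_trans; [apply Rabs_triang|]. rewrite Rabs_Ropp.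
    generalize (Rabs_sin_le_1 (A0 + b * 2)) (Rabs_sin_le_1 (A0 + b * 1)). lra. }
  apply Rabs_le_between in S.
  assert (0 <= 2 * a1 * a2 / b) by (apply Rdiv_le_0_compat; nra).
  assert (2 * a1 * a2 / b <= a1 * a2 / 2).
  { apply Rmult_le_reg_r with b; [lra|].
    replace (2 * a1 * a2 / b * b) with (2 * a1 * a2) by (field; lra).
    assert (0 <= a1 * a2) by nra. nra. }
  replace (G 2 - G 1) with
    (a1 ^ 2 + a2 ^ 2 - 2 * a1 * a2 / b * (sin (A0 + b * 2) - sin (A0 + b * 1)))
    by (unfold G; field; lra).
  nra.
Qed.

Definition nu (s : R) := kappa * sqrt (sobolev_weight_min s / (2 * PI)).

Lemma nu_pos s : 0 < nu s.
Proof.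
  apply Rmult_lt_0_compat; [apply kappa_pos|]. apply sqrt_lt_R0, Rdiv_lt_0_compat;
    [apply sobolev_weight_min_pos|generalize PI_RGT_0; lra].
Qed.

Lemma Hs_norm_wave_sub_far s a1 a2 w1 c1 w2 c2 t : 0 <= a1 <= a2 -> 4 <= (c2 - c1) * t ->
  exists N, Hs_norm_is s (fun x => Csub (wave a1 w1 c1 t x) (wave a2 w2 c2 t x)) N /\
    a1 * nu s <= N.
Proof.
  intros Ha Hb. pose proof PI_RGT_0. pose proof kappa_pos.
  pose proof (sobolev_weight_min_pos s).
  destruct (Hs_norm_wave_sub_exists s a1 w1 c1 t a2 w2 c2 t) as [I [HI HN]].
  exists (sqrt (I / (2 * PI))). split; auto.
  set (q xi := kappa ^ 2 * Cnorm2 (Csub (wave_phase a1 w1 c1 t xi) (wave_phase a2 w2 c2 t xi))).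
  assert (Hq : forall xi, q xi = kappa ^ 2 * (a1 ^ 2 + a2 ^ 2
                 - 2 * a1 * a2 * cos ((w2 - w1) * t + (c2 - c1) * t * xi))).
  { intros xi. unfold q, wave_phase. rewrite Cnorm2_sub_Cscale_Cexpi.
    replace (- (w1 * t) - c1 * t * xi - (- (w2 * t) - c2 * t * xi))
      with ((w2 - w1) * t + (c2 - c1) * t * xi) by ring.
    reflexivity. }
  assert (Hqc : forall xi, continuous q xi).
  { intros xi. apply (continuous_mult (K := R_AbsRing));
      [apply (continuous_const (U := R_UniformSpace) (V := R_UniformSpace))|
       apply wave_phase_sub_continuous]. }
  assert (Hq0 : forall xi, 0 <= q xi)
    by (intros; apply Rmult_le_pos; [apply pow2_ge_0|apply Cnorm2_ge0]).
  assert (sobolev_weight_min s * (kappa ^ 2 * a1 ^ 2) <= I).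
  { eapply Rle_trans; [|apply (improper_int_ge_RInt _ _ 1 2 HI);
      [intros; apply sobolev_integrand_ge0; auto|lra]].
    eapply Rle_trans; [|apply sobolev_integrand_RInt_ge; auto].
    apply Rmult_le_compat_l; [lra|].
    rewrite (RInt_ext _ _ _ _ (fun xi _ => Hq xi)), RInt_scal_R.
    - apply Rmult_le_compat_l; [apply pow2_ge_0|]. apply RInt_phase_gap_ge; auto.
    - apply ex_RInt_continuous_R. intros x. apply ex_derive_continuous_R.
      auto_derive. auto. }
  replace (a1 * nu s) with (sqrt ((a1 * kappa) ^ 2 * (sobolev_weight_min s / (2 * PI)))).
  - apply sqrt_le_1_alt. unfold Rdiv. rewrite <- Rmult_assoc.
    apply Rmult_le_compat_r; [left; apply Rinv_0_lt_compat; lra|]. nra.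
  - rewrite sqrt_sq_mult, Rabs_right by (try apply Rdiv_le_0_compat; nra).
    unfold nu. ring.
Qed.

(** * Travelling waves solve the Szegő equation *)

Lemma L2_modulated_shift (E : Cplx) (P : R -> Cplx) p K :
  (forall y, continuous (fun y => Cnorm2 (P y)) y) ->
  (forall y, Cnorm2 (P y) <= K / (1 + y ^ 2)) ->
  L2 (fun x => Cmul E (P (x - p))).
Proof.
  intros Hc HK.
  destruct (continuous_dominated_improper_int (fun y => Cnorm2 E * Cnorm2 (P y))
              (Cnorm2 E * K)) as [l Hl].
  - intros y. apply (continuous_mult (K := R_AbsRing));
      [apply (continuous_const (U := R_UniformSpace) (V := R_UniformSpace))|apply Hc].
  - intros y. pose proof (Cnorm2_ge0 E). pose proof (Cnorm2_ge0 (P y)).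
    rewrite Rabs_right by (apply Rle_ge, Rmult_le_pos; auto).
    unfold Rdiv. rewrite Rmult_assoc. apply Rmult_le_compat_l; auto.
  - exists l. apply improper_int_ext with (2 := improper_int_shift _ _ p Hl).
    intros x. rewrite Cnorm2_mul. reflexivity.
Qed.

Lemma Cnorm2_inv_x_plus_i y : Cnorm2 (inv_x_plus_i y) = 1 / (1 + y ^ 2).
Proof.
  unfold Cnorm2, inv_x_plus_i; simpl. field. pose proof (one_plus_sq_pos y). simpl in *. lra.
Qed.

Lemma Cnorm2_inv_x_plus_i_sq y : Cnorm2 (inv_x_plus_i_sq y) = 1 / (1 + y ^ 2) ^ 2.
Proof.
  unfold Cnorm2, inv_x_plus_i_sq; simpl. field. pose proof (one_plus_sq_pos y). simpl in *. lra.
Qed.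

Definition wave_dt_profile (w c y : R) : Cplx :=
  Cadd (Cmul (0, - w) (inv_x_plus_i y)) (Cscale c (inv_x_plus_i_sq y)).

Definition wave_dt (a w c t x : R) : Cplx :=
  Cmul (wave_amplitude a w t) (wave_dt_profile w c (x - c * t)).

Lemma wave_is_derive_t a w c t x :
  derivable_pt_lim (fun tau => fst (wave a w c tau x)) t (fst (wave_dt a w c t x)) /\
  derivable_pt_lim (fun tau => snd (wave a w c tau x)) t (snd (wave_dt a w c t x)).
Proof.
  pose proof (one_plus_sq_pos (x - c * t)).
  split; apply is_derive_Reals;
    unfold wave, wave_dt, wave_amplitude, wave_dt_profile, Cmul, Cadd, Cscale, Cexpi,
      inv_x_plus_i, inv_x_plus_i_sq; simpl in *;
    auto_derive; side_conditions; field; side_conditions.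
Qed.

Lemma wave_L2 a w c t : L2 (wave a w c t).
Proof.
  apply (L2_modulated_shift _ inv_x_plus_i _ 1).
  - intros y. apply ex_derive_continuous_R. unfold Cnorm2, inv_x_plus_i; simpl.
    pose proof (one_plus_sq_pos y). auto_derive. side_conditions.
  - intros y. rewrite Cnorm2_inv_x_plus_i. lra.
Qed.

Lemma wave_dt_L2 a w c t : L2 (wave_dt a w c t).
Proof.
  apply (L2_modulated_shift _ (wave_dt_profile w c) _ (2 * w ^ 2 + 2 * c ^ 2)).
  - intros y. apply ex_derive_continuous_R.
    unfold Cnorm2, wave_dt_profile, Cmul, Cadd, Cscale, inv_x_plus_i, inv_x_plus_i_sq; simpl.
    pose proof (one_plus_sq_pos y). auto_derive. side_conditions.
  - intros y. pose proof (one_plus_sq_pos y).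
    eapply Rle_trans; [apply Cnorm2_Cadd_le|].
    rewrite Cnorm2_mul. replace (Cnorm2 (Cscale c (inv_x_plus_i_sq y)))
      with (c ^ 2 * Cnorm2 (inv_x_plus_i_sq y))
      by (destruct (inv_x_plus_i_sq y); unfold Cnorm2, Cscale; simpl; ring).
    rewrite Cnorm2_inv_x_plus_i, Cnorm2_inv_x_plus_i_sq.
    assert (1 / (1 + y ^ 2) ^ 2 <= 1 / (1 + y ^ 2)).
    { unfold Rdiv. rewrite !Rmult_1_l. apply Rinv_le_contravar; [lra|].
      pose proof (pow2_ge_0 y). nra. }
    assert (c ^ 2 * (1 / (1 + y ^ 2) ^ 2) <= c ^ 2 * (1 / (1 + y ^ 2)))
      by (apply Rmult_le_compat_l; [apply pow2_ge_0|lra]).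
    replace (Cnorm2 (0, - w)) with (w ^ 2) by (unfold Cnorm2; simpl; ring).
    replace ((2 * w ^ 2 + 2 * c ^ 2) / (1 + y ^ 2))
      with (2 * (w ^ 2 * (1 / (1 + y ^ 2))) + 2 * (c ^ 2 * (1 / (1 + y ^ 2)))) by (field; lra).
    lra.
Qed.

(* [|V|^2 V] is [a^2 / (1 + y^2) * V]; the partial fractions
   [1 / ((x + i)^2 (x - i)) = 1/4 (x + i)^-1 - 1/4 (x - i)^-1 + i/2 (x + i)^-2]. *)
Definition cubic_profile (a y : R) : Cplx :=
  Cadd (Cmul (a ^ 2 / 4, 0) (inv_x_plus_i y))
       (Cadd (Cmul (- (a ^ 2 / 4), 0) (inv_x_minus_i y)) (Cmul (0, a ^ 2 / 2) (inv_x_plus_i_sq y))).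

Lemma wave_cubic a w c t x :
  Cscale (Cnorm2 (wave a w c t x)) (wave a w c t x)
  = Cmul (wave_amplitude a w t) (cubic_profile a (x - c * t)).
Proof.
  unfold wave. rewrite Cnorm2_mul, Cnorm2_inv_x_plus_i. unfold wave_amplitude.
  rewrite Cnorm2_Cscale_Cexpi. set (y := x - c * t). destruct (Cexpi (- (w * t))) as [e1 e2].
  unfold cubic_profile, Cscale, Cmul, Cadd, inv_x_plus_i, inv_x_minus_i, inv_x_plus_i_sq; simpl.
  pose proof (one_plus_sq_pos y). f_equal; field; simpl in *; side_conditions.
Qed.

Lemma Ci_mul_wave_dt a w c t x :
  Cmul Ci (wave_dt a w c t x) = Cmul (wave_amplitude a w t)
    (Cadd (Cmul (w, 0) (inv_x_plus_i (x - c * t))) (Cmul (0, c) (inv_x_plus_i_sq (x - c * t)))).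
Proof.
  unfold wave_dt, wave_dt_profile. destruct (wave_amplitude a w t).
  destruct (inv_x_plus_i (x - c * t)), (inv_x_plus_i_sq (x - c * t)).
  unfold Ci, Cmul, Cadd, Cscale; simpl. f_equal; ring.
Qed.

(* On the Fourier side [inv_x_minus_i] lives on [xi < 0] and the other two profiles on
   [xi > 0], so [Pi_+] removes exactly the [inv_x_minus_i] term of [cubic_profile]. *)
Lemma wave_Pi_plus a t :
  is_Pi_plus (fun x => Cscale (Cnorm2 (wave a (a ^ 2 / 4) (a ^ 2 / 2) t x))
                              (wave a (a ^ 2 / 4) (a ^ 2 / 2) t x))
             (fun x => Cmul Ci (wave_dt a (a ^ 2 / 4) (a ^ 2 / 2) t x)).
Proof.
  intros xi Hxi. set (w := a ^ 2 / 4). set (c := a ^ 2 / 2).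
  eexists. split.
  - eapply has_FT_ext; [intros; symmetry; apply wave_cubic|].
    apply has_FT_modulated_shift. unfold cubic_profile.
    apply has_FT_add; [apply has_FT_scal, has_FT_inv_x_plus_i; auto|].
    apply has_FT_lin; [apply has_FT_inv_x_minus_i|apply has_FT_inv_x_plus_i_sq]; auto.
  - eapply has_FT_ext; [intros; symmetry; apply Ci_mul_wave_dt|].
    match goal with |- has_FT _ _ ?z =>
      replace z with (Cmul (wave_amplitude a w t) (Cmul (Cexpi (- (c * t * xi)))
        (Cadd (Cmul (w, 0) (0, - kernel_int xi)) (Cmul (0, c) (- xi * kernel_int xi, 0)))))
    end.
    + apply (has_FT_modulated_shift _ (fun y =>
        Cadd (Cmul (w, 0) (inv_x_plus_i y)) (Cmul (0, c) (inv_x_plus_i_sq y)))).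
      apply has_FT_lin; [apply has_FT_inv_x_plus_i|apply has_FT_inv_x_plus_i_sq]; auto.
    + destruct (Rle_dec 0 xi); cbv iota beta.
      * rewrite (kernel_int_neg (- xi)) by lra. do 2 f_equal.
        unfold Cmul, Cadd; cbn [fst snd]. unfold w, c. f_equal; ring.
      * rewrite (kernel_int_neg xi) by lra. destruct (wave_amplitude a w t).
        unfold Cmul, Cadd, Cexpi, C0; cbn [fst snd]. f_equal; ring.
Qed.

Lemma wave_in_Hs_plus s a w c t : in_Hs_plus s (wave a w c t).
Proof.
  split; [apply wave_L2|]. split.
  - intros xi Hxi. replace C0 with (Cmul (wave_phase a w c t xi) (FT_inv_x_plus_i xi)).
    + apply has_FT_wave. lra.
    + unfold FT_inv_x_plus_i. destruct (Rlt_dec 0 xi); [lra|].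
      destruct (wave_phase a w c t xi). unfold Cmul, C0; simpl. f_equal; ring.
  - eexists. apply Hs_norm_wave.
Qed.

Lemma wave_szego_solution s a :
  szego_solution s (fun t x => wave a (a ^ 2 / 4) (a ^ 2 / 2) t x).
Proof.
  split; [intros t; apply wave_in_Hs_plus|]. split; [apply Hs_continuous_wave|].
  exists (wave_dt a (a ^ 2 / 4) (a ^ 2 / 2)). split.
  - intros t x. apply wave_is_derive_t.
  - intros t. split; [apply wave_dt_L2|apply wave_Pi_plus].
Qed.

Lemma Rabs_ln_gt eps L : 0 < eps < exp (- L) -> L < Rabs (ln eps).
Proof.
  intros [H0 H1]. assert (ln eps < - L) by (rewrite <- (ln_exp (- L)); apply ln_increasing; lra).
  rewrite <- Rabs_Ropp. pose proof (Rle_abs (- ln eps)). lra.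
Qed.

(* The speeds differ by [a2^2/2 - eps^2/2 >= eps^2 / sqrt L], so at [t = delta L / eps^2]
   the two bumps are [delta sqrt L >= 4] apart. *)
Lemma separation_time eps delta L t : 0 < eps -> 0 < delta -> 16 / delta ^ 2 <= L ->
  delta / eps ^ 2 * L <= t ->
  4 <= ((eps + eps / sqrt L) ^ 2 / 2 - eps ^ 2 / 2) * t.
Proof.
  intros He Hd HL Ht.
  assert (H16 : 0 < 16 / delta ^ 2) by (apply Rdiv_lt_0_compat; [lra|apply pow_lt; lra]).
  assert (HsL : 4 / delta <= sqrt L).
  { rewrite <- (sqrt_pow2 (4 / delta)) by (apply Rlt_le, Rdiv_lt_0_compat; lra).
    apply sqrt_le_1_alt. replace ((4 / delta) ^ 2) with (16 / delta ^ 2) by (field; lra). lra. }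
  assert (HsL0 : 0 < sqrt L) by (apply sqrt_lt_R0; lra).
  assert (Ht0 : delta * sqrt L / eps ^ 2 * sqrt L <= t).
  { replace (delta * sqrt L / eps ^ 2 * sqrt L) with (delta / eps ^ 2 * (sqrt L * sqrt L))
      by (field; lra).
    rewrite sqrt_sqrt by lra. exact Ht. }
  assert (Hgap : eps ^ 2 / sqrt L <= (eps + eps / sqrt L) ^ 2 / 2 - eps ^ 2 / 2).
  { replace ((eps + eps / sqrt L) ^ 2 / 2 - eps ^ 2 / 2) with
      (eps ^ 2 / sqrt L + (eps / sqrt L) ^ 2 / 2) by (field; lra).
    pose proof (pow2_ge_0 (eps / sqrt L)). lra. }
  assert (0 < eps ^ 2 / sqrt L) by (apply Rdiv_lt_0_compat; [apply pow_lt|]; lra).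
  apply Rle_trans with (eps ^ 2 / sqrt L * (delta * sqrt L / eps ^ 2 * sqrt L)).
  - replace (eps ^ 2 / sqrt L * (delta * sqrt L / eps ^ 2 * sqrt L)) with (delta * sqrt L)
      by (field; split; lra).
    apply Rmult_le_reg_r with (/ delta); [apply Rinv_0_lt_compat; lra|].
    replace (4 * / delta) with (4 / delta) by reflexivity.
    replace (delta * sqrt L * / delta) with (sqrt L) by (field; lra). lra.
  - apply Rmult_le_compat; try lra.
    apply Rmult_le_pos; [|lra]. apply Rdiv_le_0_compat; [nra|apply pow_lt; lra].
Qed.

Lemma div_le_mul_of_inv_le x m K : 0 <= x -> 0 < m -> / m <= K -> x / K <= x * m.
Proof.
  intros Hx Hm HK. pose proof (Rinv_0_lt_compat m Hm). unfold Rdiv.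
  apply Rmult_le_compat_l; [lra|].
  rewrite <- (Rinv_inv m). apply Rinv_le_contravar; lra.
Qed.

Lemma div_sqrt_abs_ln_bounds eps : 0 < eps -> 1 <= Rabs (ln eps) ->
  0 < eps / sqrt (Rabs (ln eps)) <= eps.
Proof.
  intros He HL.
  assert (Hsq : 1 <= sqrt (Rabs (ln eps))) by (rewrite <- sqrt_1; apply sqrt_le_1_alt; lra).
  split; [apply Rdiv_lt_0_compat; lra|].
  apply Rmult_le_reg_r with (sqrt (Rabs (ln eps))); [lra|].
  unfold Rdiv. rewrite Rmult_assoc, Rinv_l by lra. nra.
Qed.

Lemma Hs_norm_wave_pair_le s a d w1 c1 w2 c2 t : 0 <= d <= a ->
  exists N1 N2, Hs_norm_is s (wave a w1 c1 t) N1 /\ Hs_norm_is s (wave (a + d) w2 c2 t) N2 /\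
    N1 + N2 <= 3 * mu s * a.
Proof.
  intros Hd. pose proof (mu_pos s).
  exists (Rabs a * mu s), (Rabs (a + d) * mu s).
  split; [apply Hs_norm_wave|]. split; [apply Hs_norm_wave|].
  rewrite (Rabs_right a), (Rabs_right (a + d)) by lra. nra.
Qed.

Lemma Hs_norm_wave_sub_add_0 s a d w1 c1 w2 c2 : 0 <= d ->
  Hs_norm_is s (fun x => Csub (wave a w1 c1 0 x) (wave (a + d) w2 c2 0 x)) (d * mu s).
Proof.
  intros Hd. pose proof (Hs_norm_wave_sub_0 s a w1 c1 (a + d) w2 c2) as H.
  replace (Rabs (a - (a + d))) with d in H by (rewrite Rabs_left1 by lra; ring).
  exact H.
Qed.

Theorem proposition2p3 :
  forall s delta : R, -1/2 < s -> 0 < delta ->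
  exists eps0, 0 < eps0 /\
  exists K, 0 < K /\
  forall eps, 0 < eps < eps0 ->
  exists V1 V2 : R -> R -> Cplx,
    szego_solution s V1 /\ szego_solution s V2 /\
    (exists N1 N2, Hs_norm_is s (V1 0) N1 /\ Hs_norm_is s (V2 0) N2 /\
                   N1 + N2 <= K * eps) /\
    (exists D, Hs_norm_is s (fun x => Csub (V1 0 x) (V2 0 x)) D /\
               eps / sqrt (Rabs (ln eps)) / K <= D /\
               D <= K * (eps / sqrt (Rabs (ln eps)))) /\
    (forall t, delta / eps ^ 2 * Rabs (ln eps) <= t ->
       exists D, Hs_norm_is s (fun x => Csub (V1 t x) (V2 t x)) D /\
                 eps / K <= D).
Proof.
  intros s delta _ Hd.
  pose proof (mu_pos s) as Hmu. pose proof (nu_pos s) as Hnu.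
  pose proof (Rinv_0_lt_compat _ Hmu). pose proof (Rinv_0_lt_compat _ Hnu).
  assert (H16 : 0 < 16 / delta ^ 2) by (apply Rdiv_lt_0_compat; [lra|apply pow_lt; lra]).
  exists (exp (- (1 + 16 / delta ^ 2))). split; [apply exp_pos|].
  set (K := 3 * mu s + / mu s + / nu s + 1). exists K. split; [unfold K; lra|].
  intros eps Heps. pose proof (Rabs_ln_gt _ _ Heps) as HL.
  set (d := eps / sqrt (Rabs (ln eps))).
  assert (Hd0 : 0 < d <= eps) by (apply div_sqrt_abs_ln_bounds; lra).
  exists (fun t x => wave eps (eps ^ 2 / 4) (eps ^ 2 / 2) t x).
  exists (fun t x => wave (eps + d) ((eps + d) ^ 2 / 4) ((eps + d) ^ 2 / 2) t x).
  split; [apply wave_szego_solution|]. split; [apply wave_szego_solution|]. split.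
  { destruct (Hs_norm_wave_pair_le s eps d (eps ^ 2 / 4) (eps ^ 2 / 2)
      ((eps + d) ^ 2 / 4) ((eps + d) ^ 2 / 2) 0) as [N1 [N2 [HN1 [HN2 HN]]]]; [lra|].
    exists N1, N2. split; [exact HN1|]. split; [exact HN2|]. unfold K. nra. }
  split.
  { exists (d * mu s). split; [apply Hs_norm_wave_sub_add_0; lra|]. fold d.
    split; [apply div_le_mul_of_inv_le; unfold K; lra|unfold K; nra]. }
  intros t Ht.
  destruct (Hs_norm_wave_sub_far s eps (eps + d) (eps ^ 2 / 4) (eps ^ 2 / 2)
              ((eps + d) ^ 2 / 4) ((eps + d) ^ 2 / 2) t) as [N [HN HNlow]];
    [lra|unfold d; apply (separation_time _ delta); lra|].
  exists N. split; [exact HN|]. eapply Rle_trans; [|exact HNlow].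
  apply div_le_mul_of_inv_le; unfold K; lra.
Qed.
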